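(* In the setting of fixed unlabeled samples $S_1,\dots,S_T$, fixed $I$ with $|I|=k$, and fixed $\alpha^1,\dots,\alpha^T\in\Lambda^I$, define $$\Phi=\sup_{h_1,\dots,h_T\in\mathcal{H}}\frac1T\sum_{t=1}^T\big(\tilde{\mathrm{er}}_{\alpha^t}(h_t)-\widehat{\mathrm{er}}_{\alpha^t}(h_t)\big),$$ where the $\overline{S}_i$ ($i\in I$) are independent uniformly random $m$-subsets of $S_i$ drawn without replacement. Assume $\mathcal{H}$ has VC dimension $d$ with $1\le d\le m\le n$. Then $$\mathbb{E}_{\overline{S}_i,\,i\in I}\,\Phi\le\frac1T\sum_{t=1}^T\sqrt{\sum_{i\in I}(\alpha^t_i)^2}\cdot\sqrt{\frac{2d\log(ekm/d)}{m}}.$$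
   Context: Here $S_i=(x^i_1,\dots,x^i_n)$. Labeling functions $f_i:\mathcal{X}\to\{-1,1\}$ are given, and $\ell$ is the $0/1$-loss. Weight sets: $\Lambda^I=\{\alpha\in[0,1]^T:\sum_i\alpha_i=1,\ \alpha_i=0\text{ for }i\notin I\}$. Empirical errors: - $\tilde{\mathrm{er}}_i(h)=\frac1n\sum_{j=1}^n\ell(h(x^i_j),f_i(x^i_j))$; - $\widehat{\mathrm{er}}_i(h)=\frac1m\sum_{x\in\overline{S}_i}\ell(h(x),f_i(x))$; - $\tilde{\mathrm{er}}_\alpha=\sum_{i\in I}\alpha_i\tilde{\mathrm{er}}_i$ and $\widehat{\mathrm{er}}_\alpha=\sum_{i\in I}\alpha_i\widehat{\mathrm{er}}_i$. *)

From Stdlib Require Import Reals Lra Lia List Arith Bool.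
From Stdlib Require Import Classical ClassicalEpsilon.
Import ListNotations.
Open Scope R_scope.

Definition sumR {A : Type} (l : list A) (F : A -> R) : R :=
  fold_right (fun a acc => F a + acc) 0 l.

(* supremum (least upper bound) of a set of reals, chosen classically;
   it is the actual lub whenever one exists *)
Definition Rsup (E : R -> Prop) : R :=
  epsilon (inhabits 0) (fun s => is_lub E s).

(* 0/1 loss; labels {-1,1} are encoded as bool *)
Definition loss01 (a b : bool) : R := if Bool.eqb a b then 0 else 1.

(* all m-subsets of {0,...,n-1}, each given as a strictly increasing list of
   positions (subsets of the sample S_i = (x^i_0,...,x^i_{n-1}) by position) *)
Fixpoint msubsets_from (lo n m : nat) {struct n} : list (list nat) :=
  match m with
  | O => [ [] ]
  | S m' =>
    match n with
    | O => []
    | S n' => map (cons lo) (msubsets_from (S lo) n' m')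
              ++ msubsets_from (S lo) n' m
    end
  end.
Definition msubsets (n m : nat) : list (list nat) := msubsets_from 0 n m.

(* all tuples (Sbar_i)_{i in I} of m-subsets of {0..n-1}, as functions
   nat -> list nat (values outside I are irrelevant, set to []) *)
Fixpoint choices (I : list nat) (n m : nat) : list (nat -> list nat) :=
  match I with
  | [] => [ fun _ => [] ]
  | i :: I' =>
    flat_map (fun s => map (fun g => fun j => if Nat.eqb j i then s else g j)
                           (choices I' n m))
             (msubsets n m)
  end.

Definition expect_subsets (I : list nat) (n m : nat)
  (F : (nat -> list nat) -> R) : R :=
  sumR (choices I n m) F / INR (length (choices I n m)).

Section Errors.
Context {X : Type} (S : nat -> nat -> X) (f : nat -> X -> bool) (n m : nat).

Definition er_tilde (i : nat) (h : X -> bool) : R :=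
  / INR n * sumR (seq 0 n) (fun j => loss01 (h (S i j)) (f i (S i j))).

Definition er_hat (sb : list nat) (i : nat) (h : X -> bool) : R :=
  / INR m * sumR sb (fun j => loss01 (h (S i j)) (f i (S i j))).

Definition er_tilde_w (I : list nat) (a : nat -> R) (h : X -> bool) : R :=
  sumR I (fun i => a i * er_tilde i h).

Definition er_hat_w (Sbar : nat -> list nat) (I : list nat) (a : nat -> R)
  (h : X -> bool) : R :=
  sumR I (fun i => a i * er_hat (Sbar i) i h).
End Errors.

(* alpha in Lambda^I  (indices of tasks are 0..T-1) *)
Definition in_Lambda (T : nat) (I : list nat) (a : nat -> R) : Prop :=
  (forall i, (i < T)%nat -> 0 <= a i <= 1) /\
  sumR I a = 1 /\
  (forall i, (i < T)%nat -> ~ In i I -> a i = 0).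

Definition shatters {X : Type} (H : (X -> bool) -> Prop) (P : list X) : Prop :=
  NoDup P /\
  forall b : X -> bool, exists h, H h /\ forall x, In x P -> h x = b x.

Definition VCdim {X : Type} (H : (X -> bool) -> Prop) (d : nat) : Prop :=
  (exists P, length P = d /\ shatters H P) /\
  (forall P, shatters H P -> (length P <= d)%nat).

Definition Phi {X : Type} (S : nat -> nat -> X) (f : nat -> X -> bool)
  (H : (X -> bool) -> Prop) (T n m : nat) (I : list nat)
  (alpha : nat -> nat -> R) (Sbar : nat -> list nat) : R :=
  Rsup (fun v => exists hs : nat -> (X -> bool),
          (forall t, (t < T)%nat -> H (hs t)) /\
          v = / INR T * sumR (seq 0 T) (fun t =>
                er_tilde_w S f n I (alpha t) (hs t)
                - er_hat_w S f m Sbar I (alpha t) (hs t))).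

(** Since the supremum of a sum is at most the sum of the suprema, it suffices to bound
    [E sup_h (er~_a(h) - er^_a(h))] for one weight vector [a].  Drawing an [m]-subset
    without replacement amounts to keeping the first [m] entries of a uniform permutation of the
    [n = m + r] sample points.  Averaging over all cyclic rotations of the two blocks (the first
    [m] and the last [r] positions) writes the deviation as [r/n] times the mean gap over
    [p = min m r] disjoint pairs of positions, one in each block.  Swapping the members of each
    pair independently at random leaves the law of the permutation unchanged and turns the gaps
    into a Rademacher sum over at most [k m] points.  Massart's finite class lemma (through
    Hoeffding's bound [cosh u <= exp (u^2/2)]) together with the Sauer-Shelah bound
    [(e k m / d)^d] on the number of labelings of these points bounds its expected supremum by
    [sqrt (p sum_i a_i^2 / 4) * sqrt (2 d ln (e k m / d))], and [r^2 m <= n^2 p] yields the claim. *)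

From Stdlib Require Import Reals List Lra Lia Bool Permutation ListDec Sorted.
From Stdlib Require Import ClassicalEpsilon FunctionalExtensionality.
From Coquelicot Require Import Coquelicot.
Import ListNotations.
Open Scope R_scope.

Lemma sumR_nil {A} (F : A -> R) : sumR [] F = 0.
Proof. reflexivity. Qed.

Lemma sumR_cons {A} (a : A) l F : sumR (a :: l) F = F a + sumR l F.
Proof. reflexivity. Qed.

Lemma sumR_app {A} (l1 l2 : list A) F : sumR (l1 ++ l2) F = sumR l1 F + sumR l2 F.
Proof. induction l1 as [|a l1 IH]; cbn [app]; [rewrite sumR_nil; lra|]. rewrite !sumR_cons, IH; lra. Qed.

Lemma sumR_map {A B} (f : A -> B) l F : sumR (map f l) F = sumR l (fun x => F (f x)).
Proof. induction l as [|a l IH]; cbn [map]; auto. rewrite !sumR_cons, IH; auto. Qed.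

Lemma sumR_flat_map {A B} (f : A -> list B) l F :
  sumR (flat_map f l) F = sumR l (fun a => sumR (f a) F).
Proof. induction l as [|a l IH]; cbn [flat_map]; auto. rewrite sumR_app, IH; auto. Qed.

Lemma sumR_ext {A} (l : list A) F G :
  (forall x, In x l -> F x = G x) -> sumR l F = sumR l G.
Proof.
  induction l as [|a l IH]; intros HFG; auto. rewrite !sumR_cons.
  rewrite HFG by (left; auto). rewrite IH; auto. intros; apply HFG; right; auto.
Qed.

Lemma sumR_plus {A} (l : list A) F G : sumR l (fun x => F x + G x) = sumR l F + sumR l G.
Proof. induction l as [|a l IH]; [rewrite !sumR_nil; lra|]. rewrite !sumR_cons, IH; lra. Qed.

Lemma sumR_minus {A} (l : list A) F G : sumR l (fun x => F x - G x) = sumR l F - sumR l G.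
Proof. induction l as [|a l IH]; [rewrite !sumR_nil; lra|]. rewrite !sumR_cons, IH; lra. Qed.

Lemma sumR_scal {A} (l : list A) c F : sumR l (fun x => c * F x) = c * sumR l F.
Proof. induction l as [|a l IH]; [rewrite !sumR_nil; lra|]. rewrite !sumR_cons, IH; lra. Qed.

Lemma sumR_const {A} (l : list A) c : sumR l (fun _ => c) = INR (length l) * c.
Proof.
  induction l as [|a l IH]; [rewrite sumR_nil; simpl; lra|].
  rewrite sumR_cons, IH, length_cons, S_INR; lra.
Qed.

Lemma sumR_le {A} (l : list A) F G :
  (forall x, In x l -> F x <= G x) -> sumR l F <= sumR l G.
Proof.
  induction l as [|a l IH]; intros HFG; [rewrite !sumR_nil; lra|]. rewrite !sumR_cons.
  apply Rplus_le_compat; [apply HFG; left; auto | apply IH; intros; apply HFG; right; auto].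
Qed.

Lemma sumR_nonneg {A} (l : list A) F : (forall x, In x l -> 0 <= F x) -> 0 <= sumR l F.
Proof. intros HF. rewrite <- (Rmult_0_r (INR (length l))), <- sumR_const. apply sumR_le; auto. Qed.

Lemma sumR_ge_elem {A} (l : list A) F x :
  In x l -> (forall y, In y l -> 0 <= F y) -> F x <= sumR l F.
Proof.
  induction l as [|a l IH]; intros Hx HF; [contradiction|]. rewrite sumR_cons.
  assert (Ha := HF a (or_introl eq_refl)).
  destruct Hx as [<- | Hx].
  - pose proof (sumR_nonneg l F (fun y Hy => HF y (or_intror Hy))). lra.
  - pose proof (IH Hx (fun y Hy => HF y (or_intror Hy))). lra.
Qed.

Lemma sumR_pos_exists {A} (l : list A) F : 0 < sumR l F -> exists x, In x l /\ 0 < F x.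
Proof.
  induction l as [|a l IH]; intros Hs; [rewrite sumR_nil in Hs; lra|]. rewrite sumR_cons in Hs.
  destruct (Rlt_dec 0 (F a)) as [Ha|Ha]; [exists a; simpl; auto|].
  destruct IH as [x [Hx Hfx]]; [lra|]. exists x; simpl; auto.
Qed.

Lemma sumR_perm {A} (l1 l2 : list A) F : Permutation l1 l2 -> sumR l1 F = sumR l2 F.
Proof. induction 1; rewrite ?sumR_cons; lra. Qed.

Lemma sumR_comm {A B} (l1 : list A) (l2 : list B) F :
  sumR l1 (fun a => sumR l2 (fun b => F a b)) = sumR l2 (fun b => sumR l1 (fun a => F a b)).
Proof.
  induction l1 as [|a l1 IH].
  - rewrite sumR_nil, <- (Rmult_0_r (INR (length l2))), <- sumR_const. apply sumR_ext; auto.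
  - rewrite sumR_cons, IH, <- sumR_plus. apply sumR_ext; intros; rewrite sumR_cons; auto.
Qed.

Lemma sumR_seq_S p F : sumR (seq 0 (S p)) F = F 0%nat + sumR (seq 0 p) (fun j => F (S j)).
Proof. simpl seq. rewrite sumR_cons, <- seq_shift, sumR_map; auto. Qed.

Lemma sumR_seq_add a b F :
  sumR (seq 0 (a + b)) F = sumR (seq 0 a) F + sumR (seq 0 b) (fun q => F (a + q)%nat).
Proof.
  rewrite seq_app, sumR_app. f_equal. simpl.
  replace (seq a b) with (map (fun q => (a + q)%nat) (seq 0 b)).
  - rewrite sumR_map; auto.
  - revert a. induction b as [|b IH]; intros a; auto. cbn [seq map].
    rewrite <- seq_shift, map_map, <- (IH (S a)). f_equal; [lia|].
    apply map_ext; intros; lia.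
Qed.

Definition avg {A} (l : list A) (F : A -> R) : R := sumR l F / INR (length l).

Lemma INR_length_pos {A} (l : list A) : l <> [] -> 0 < INR (length l).
Proof. intros Hl. apply lt_0_INR. destruct l; [congruence | simpl; lia]. Qed.

Lemma Rinv_INR_nonneg n : 0 <= / INR n.
Proof. destruct n; [simpl; rewrite Rinv_0; lra | left; apply Rinv_0_lt_compat, lt_0_INR; lia]. Qed.

Lemma seq_0_not_nil t : (0 < t)%nat -> seq 0 t <> [].
Proof. destruct t; [lia | discriminate]. Qed.

Lemma avg_ext {A} (l : list A) F G : (forall x, In x l -> F x = G x) -> avg l F = avg l G.
Proof. intros HFG; unfold avg; rewrite (sumR_ext _ _ _ HFG); auto. Qed.

Lemma avg_le {A} (l : list A) F G : (forall x, In x l -> F x <= G x) -> avg l F <= avg l G.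
Proof.
  intros HFG; unfold avg. destruct l as [|a l]; [rewrite !sumR_nil; lra|].
  apply Rmult_le_compat_r; [left; apply Rinv_0_lt_compat, INR_length_pos; congruence|].
  apply sumR_le; auto.
Qed.

Lemma avg_const {A} (l : list A) c : l <> [] -> avg l (fun _ => c) = c.
Proof. intros Hl; unfold avg; rewrite sumR_const. pose proof (INR_length_pos l Hl). field; lra. Qed.

Lemma avg_plus {A} (l : list A) F G : avg l (fun x => F x + G x) = avg l F + avg l G.
Proof. unfold avg; rewrite sumR_plus; unfold Rdiv; ring. Qed.

Lemma avg_scal {A} (l : list A) c F : avg l (fun x => c * F x) = c * avg l F.
Proof. unfold avg; rewrite sumR_scal; unfold Rdiv; ring. Qed.

Lemma avg_sumR {A B} (l : list A) (L : list B) F :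
  avg l (fun x => sumR L (fun b => F x b)) = sumR L (fun b => avg l (fun x => F x b)).
Proof.
  unfold avg, Rdiv. rewrite sumR_comm, Rmult_comm, <- sumR_scal.
  apply sumR_ext; intros; ring.
Qed.

Lemma avg_comm {A B} (l1 : list A) (l2 : list B) F :
  avg l1 (fun a => avg l2 (fun b => F a b)) = avg l2 (fun b => avg l1 (fun a => F a b)).
Proof.
  unfold avg, Rdiv.
  assert (Hpull : forall (U V : Type) (C : list U) (D : list V) (G : U -> V -> R),
    sumR C (fun a => sumR D (fun b => G a b) * / INR (length D))
    = sumR C (fun a => sumR D (fun b => G a b)) * / INR (length D)).
  { intros. rewrite Rmult_comm, <- sumR_scal. apply sumR_ext; intros; ring. }
  rewrite (Hpull _ _ l1 l2 F), (Hpull _ _ l2 l1 (fun b a => F a b)), sumR_comm. ring.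
Qed.

Lemma avg_nonneg {A} (l : list A) F : (forall x, In x l -> 0 <= F x) -> 0 <= avg l F.
Proof.
  intros HF. destruct l as [|a l]; [unfold avg; rewrite sumR_nil; lra|].
  rewrite <- (avg_const (a :: l) 0) by congruence. apply avg_le; auto.
Qed.

Lemma avg_pos {A} (l : list A) F : l <> [] -> (forall x, In x l -> 0 < F x) -> 0 < avg l F.
Proof.
  intros Hl HF. destruct l as [|a l]; [congruence|]. unfold avg.
  apply Rdiv_lt_0_compat; [|apply INR_length_pos; congruence]. rewrite sumR_cons.
  pose proof (HF a (or_introl eq_refl)).
  pose proof (sumR_nonneg l F (fun y Hy => Rlt_le _ _ (HF y (or_intror Hy)))). lra.
Qed.

Lemma avg_bij {A} (l : list A) (phi : A -> A) F :
  NoDup l -> (forall x, In x l -> In (phi x) l) ->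
  (forall x y, In x l -> In y l -> phi x = phi y -> x = y) ->
  avg l (fun x => F (phi x)) = avg l F.
Proof.
  intros Hnd Hin Hinj. unfold avg. f_equal. rewrite <- sumR_map. apply sumR_perm.
  apply NoDup_Permutation_bis; [| rewrite length_map; lia |].
  - apply NoDup_map_NoDup_ForallPairs; [intros x y Hx Hy; apply Hinj; auto | auto].
  - intros y Hy; apply in_map_iff in Hy as [x [<- Hx]]; auto.
Qed.

Lemma avg_ln_le {A} (L : list A) Z : L <> [] -> (forall x, In x L -> 0 < Z x) ->
  avg L (fun x => ln (Z x)) <= ln (avg L Z).
Proof.
  intros HL HZ. set (mu := avg L Z).
  assert (Hmu : 0 < mu) by (apply avg_pos; auto).
  transitivity (avg L (fun x => ln mu + (/ mu * Z x + - 1))).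
  - apply avg_le; intros x Hx. assert (Hq : 0 < Z x / mu) by (apply Rdiv_lt_0_compat; auto).
    pose proof (exp_ineq1_le (ln (Z x / mu))) as Hexp. rewrite exp_ln in Hexp by auto.
    unfold Rdiv in Hexp. rewrite ln_mult, ln_Rinv in Hexp by (auto; apply Rinv_0_lt_compat; auto).
    unfold Rdiv in Hq. lra.
  - rewrite !avg_plus, avg_scal, !avg_const by auto. fold mu. field_simplify; lra.
Qed.

Definition fupdate {A} (g : nat -> A) (i : nat) (s : A) : nat -> A :=
  fun j => if Nat.eqb j i then s else g j.

(** All maps [I -> L] (equal to [d] outside [I]); averaging over this list is the expectation
    under independent uniform coordinates. *)
Fixpoint prod_space {A} (I : list nat) (L : list A) (d : A) : list (nat -> A) :=
  match I with
  | [] => [fun _ => d]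
  | i :: I' => flat_map (fun s => map (fun g => fupdate g i s) (prod_space I' L d)) L
  end.

Lemma choices_eq_prod_space I n m : choices I n m = prod_space I (msubsets n m) [].
Proof. induction I as [|i I IH]; simpl; auto. rewrite IH; auto. Qed.

Lemma prod_space_not_nil {A} I (L : list A) d : L <> [] -> prod_space I L d <> [].
Proof.
  intros HL. induction I as [|i I IH]; simpl; [congruence|].
  destruct L as [|s L]; [congruence|]. destruct (prod_space I (s :: L) d); [congruence|].
  simpl; congruence.
Qed.

Lemma prod_space_in {A} I (L : list A) d y :
  In y (prod_space I L d) -> forall i, In i I -> In (y i) L.
Proof.
  revert y; induction I as [|i0 I IH]; intros y Hy i Hi; [contradiction|].
  simpl in Hy. apply in_flat_map in Hy as [s [Hs Hy]]. apply in_map_iff in Hy as [g [<- Hg]].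
  unfold fupdate. destruct (Nat.eqb_spec i i0); auto.
  destruct Hi as [->|Hi]; [congruence|]. apply IH; auto.
Qed.

Lemma avg_prod_space_nil {A} (L : list A) d F : avg (prod_space [] L d) F = F (fun _ => d).
Proof. unfold avg. cbn [prod_space length]. rewrite sumR_cons, sumR_nil. simpl; field. Qed.

Lemma length_flat_map_const {A B} (f : A -> list B) c l :
  (forall x, length (f x) = c) -> length (flat_map f l) = (length l * c)%nat.
Proof. intros Hf. induction l as [|x l IH]; simpl; auto. rewrite length_app, Hf, IH. lia. Qed.

Lemma avg_prod_space_cons {A} i I (L : list A) d F : L <> [] ->
  avg (prod_space (i :: I) L d) F
  = avg L (fun s => avg (prod_space I L d) (fun g => F (fupdate g i s))).
Proof.
  intros HL. pose proof (INR_length_pos _ HL) as HL0.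
  pose proof (INR_length_pos _ (prod_space_not_nil I L d HL)) as HP0.
  unfold avg. simpl prod_space. rewrite sumR_flat_map, (length_flat_map_const _ (length (prod_space I L d)))
    by (intros; apply length_map).
  rewrite mult_INR. unfold Rdiv.
  rewrite (Rmult_comm _ (/ INR (length L))), <- sumR_scal, Rmult_comm, <- sumR_scal.
  apply sumR_ext; intros. rewrite sumR_map. field; lra.
Qed.

(** Coordinatewise measure-preserving maps [psi i : L2 -> L1] transport the product average;
    [Rel] is a congruence of the integrand (e.g. equality up to permutation). *)
Lemma avg_prod_space_transfer {A B} (Rel : A -> A -> Prop) (Rrefl : forall a, Rel a a)
  (L1 : list A) (L2 : list B) d1 d2 (psi : nat -> B -> A) (I : list nat) :
  L1 <> [] -> L2 <> [] ->
  (forall i, In i I -> forall G : A -> R, (forall a a', Rel a a' -> G a = G a') ->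
      avg L1 G = avg L2 (fun b => G (psi i b))) ->
  forall F : (nat -> A) -> R, (forall x y, (forall i, In i I -> Rel (x i) (y i)) -> F x = F y) ->
  avg (prod_space I L1 d1) F = avg (prod_space I L2 d2) (fun y => F (fun j => psi j (y j))).
Proof.
  intros H1 H2 Hc. induction I as [|i I IH]; intros F HF.
  - rewrite !avg_prod_space_nil. apply HF. intros i [].
  - rewrite !avg_prod_space_cons by auto.
    transitivity (avg L1 (fun s =>
      avg (prod_space I L2 d2) (fun y => F (fupdate (fun j => psi j (y j)) i s)))).
    { apply avg_ext; intros s Hs. apply (IH (fun i Hi => Hc i (or_intror Hi)) (fun x => F (fupdate x i s))).
      intros x y Hxy. apply HF. intros j Hj. unfold fupdate.
      destruct (Nat.eqb_spec j i); auto. destruct Hj; [congruence|auto]. }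
    rewrite avg_comm, (avg_comm L2). apply avg_ext; intros y Hy.
    rewrite (Hc i (or_introl eq_refl) (fun s => F (fupdate (fun j => psi j (y j)) i s))).
    + apply avg_ext; intros b Hb. f_equal. apply functional_extensionality; intro j.
      unfold fupdate. destruct (Nat.eqb_spec j i); subst; auto.
    + intros a a' Ha. apply HF. intros j Hj. unfold fupdate. destruct (Nat.eqb j i); auto.
Qed.

Lemma avg_prod_space_exp_sum_le {A} (L : list A) d (I : list nat) (Y : nat -> A -> R) (c : nat -> R) :
  NoDup I -> L <> [] ->
  (forall i, In i I -> avg L (fun b => exp (Y i b)) <= exp (c i)) ->
  avg (prod_space I L d) (fun x => exp (sumR I (fun i => Y i (x i)))) <= exp (sumR I c).
Proof.
  intros HI HL. induction I as [|i I IH]; intros Hc.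
  - rewrite avg_prod_space_nil, !sumR_nil. lra.
  - inversion HI as [|? ? HiI HI']; subst. rewrite avg_prod_space_cons by auto.
    transitivity (avg L (fun s => exp (Y i s)
                    * avg (prod_space I L d) (fun x => exp (sumR I (fun j => Y j (x j)))))).
    { right. apply avg_ext; intros s Hs. rewrite <- avg_scal. apply avg_ext; intros x Hx.
      rewrite sumR_cons, exp_plus. unfold fupdate at 1. rewrite Nat.eqb_refl. f_equal. f_equal.
      apply sumR_ext; intros j Hj. unfold fupdate. destruct (Nat.eqb_spec j i); subst; tauto. }
    rewrite sumR_cons, exp_plus, Rmult_comm.
    transitivity (avg L (fun s => exp (sumR I c) * exp (Y i s))).
    { apply avg_le; intros s Hs. rewrite (Rmult_comm (exp (sumR I c))).
      apply Rmult_le_compat_l; [left; apply exp_pos|].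
      apply IH; auto. intros; apply Hc; right; auto. }
    rewrite avg_scal. apply Rmult_le_compat_l; [left; apply exp_pos|]. apply Hc; left; auto.
Qed.

Fixpoint tuples (n L : nat) : list (list nat) :=
  match L with
  | O => [[]]
  | S L' => flat_map (fun a => map (cons a) (tuples n L')) (seq 0 n)
  end.

Lemma tuples_spec n L t :
  In t (tuples n L) <-> length t = L /\ (forall x, In x t -> (x < n)%nat).
Proof.
  revert t; induction L as [|L IH]; intros t; simpl.
  - split; [intros [<-|[]]; simpl; split; auto; intros x []|].
    intros [Ht _]; destruct t; simpl in *; auto; lia.
  - rewrite in_flat_map. split.
    + intros [a [Ha Ht]]. apply in_map_iff in Ht as [t' [<- Ht']]. apply IH in Ht' as [H1 H2].
      apply in_seq in Ha. simpl; split; auto. intros x [<-|Hx]; auto; lia.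
    + intros [H1 H2]. destruct t as [|a t']; simpl in H1; [lia|]. exists a; split.
      * apply in_seq. specialize (H2 a (or_introl eq_refl)). lia.
      * apply in_map, IH. split; auto. intros; apply H2; right; auto.
Qed.

Lemma tuples_NoDup n L : NoDup (tuples n L).
Proof.
  induction L as [|L IH]; simpl; [constructor; auto; constructor|].
  generalize (seq_NoDup n 0). generalize (seq 0 n). intros l Hl.
  induction l as [|a l IHl]; simpl; [constructor|]. inversion Hl; subst. apply NoDup_app.
  - apply NoDup_map_NoDup_ForallPairs; auto. intros x y _ _ E; injection E; auto.
  - apply IHl; auto.
  - intros t Ht1 Ht2. apply in_map_iff in Ht1 as [t1 [<- _]].
    apply in_flat_map in Ht2 as [b [Hb Ht]]. apply in_map_iff in Ht as [t2 [E _]].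
    injection E; intros; subst. contradiction.
Qed.

Definition perms (n : nat) : list (list nat) :=
  filter (fun g => if NoDup_dec Nat.eq_dec g then true else false) (tuples n n).

Lemma perms_spec n g :
  In g (perms n) <-> length g = n /\ (forall x, In x g -> (x < n)%nat) /\ NoDup g.
Proof.
  unfold perms. rewrite filter_In, tuples_spec.
  destruct (NoDup_dec Nat.eq_dec g); intuition congruence.
Qed.

Lemma perms_NoDup n : NoDup (perms n).
Proof. apply NoDup_filter, tuples_NoDup. Qed.

Lemma in_perms_iff n g : In g (perms n) <-> Permutation g (seq 0 n).
Proof.
  rewrite perms_spec. split.
  - intros [H1 [H2 H3]]. apply NoDup_Permutation_bis; auto; [rewrite length_seq; lia|].
    intros x Hx; apply in_seq; specialize (H2 x Hx); lia.
  - intros HP. split; [rewrite (Permutation_length HP), length_seq; auto|]. split.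
    + intros x Hx. apply (Permutation_in _ HP), in_seq in Hx. lia.
    + apply (Permutation_NoDup (Permutation_sym HP)), seq_NoDup.
Qed.

Lemma perms_not_nil n : perms n <> [].
Proof. intro E. assert (Hid : In (seq 0 n) (perms n)) by (apply in_perms_iff; auto). rewrite E in Hid; auto. Qed.

Definition nth0 (g : list nat) (j : nat) : nat := nth j g 0%nat.

(** [perm_comp g tau] is the composition [g o tau] of permutations written as lists of images. *)
Definition perm_comp (g tau : list nat) : list nat := map (nth0 g) tau.

Lemma nth0_lt n g i : In g (perms n) -> (i < n)%nat -> (nth0 g i < n)%nat.
Proof. intros Hg Hi. apply perms_spec in Hg as [G1 [G2 _]]. apply G2, nth_In. lia. Qed.

Lemma nth0_inj n g i j :
  In g (perms n) -> (i < n)%nat -> (j < n)%nat -> nth0 g i = nth0 g j -> i = j.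
Proof.
  intros Hg Hi Hj E. apply perms_spec in Hg as [G1 [_ G3]].
  apply (NoDup_nth g 0%nat) in E; auto; lia.
Qed.

Lemma map_eq_in {A B} (f1 f2 : A -> B) l : map f1 l = map f2 l -> forall x, In x l -> f1 x = f2 x.
Proof.
  induction l as [|a l IH]; simpl; intros E x Hx; [contradiction|]. injection E; intros E2 E1.
  destruct Hx; subst; auto.
Qed.

Lemma perm_comp_in n g tau :
  In g (perms n) -> In tau (perms n) -> In (perm_comp g tau) (perms n).
Proof.
  intros Hg Htau. pose proof Htau as Ht. apply perms_spec in Ht as [T1 [T2 T3]].
  apply perms_spec. unfold perm_comp. split; [rewrite length_map; auto|]. split.
  - intros x Hx. apply in_map_iff in Hx as [j [<- Hj]]. apply (nth0_lt n); auto.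
  - apply NoDup_map_NoDup_ForallPairs; auto. intros x y Hx Hy. apply (nth0_inj n); auto.
Qed.

Lemma perm_comp_inj n g g' tau : In g (perms n) -> In g' (perms n) -> In tau (perms n) ->
  perm_comp g tau = perm_comp g' tau -> g = g'.
Proof.
  intros Hg Hg' Ht E. apply perms_spec in Hg as [G1 _]. apply perms_spec in Hg' as [G1' _].
  apply in_perms_iff in Ht. apply (nth_ext _ _ 0%nat 0%nat); [congruence|].
  intros j Hj. apply (map_eq_in _ _ _ E). apply (Permutation_in _ (Permutation_sym Ht)), in_seq. lia.
Qed.

Lemma avg_perm_comp n tau (F : list nat -> R) : In tau (perms n) ->
  avg (perms n) (fun g => F (perm_comp g tau)) = avg (perms n) F.
Proof.
  intros Htau. apply avg_bij; [apply perms_NoDup| intros; apply perm_comp_in; auto|].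
  intros x y Hx Hy; eapply perm_comp_inj; eauto.
Qed.

Lemma map_seq_in_perms n (f : nat -> nat) : (forall j, (j < n)%nat -> (f j < n)%nat) ->
  (forall i j, (i < n)%nat -> (j < n)%nat -> f i = f j -> i = j) -> In (map f (seq 0 n)) (perms n).
Proof.
  intros H1 H2. apply perms_spec. split; [rewrite length_map, length_seq; auto|]. split.
  - intros x Hx. apply in_map_iff in Hx as [j [<- Hj]]. apply in_seq in Hj; apply H1; lia.
  - apply NoDup_map_NoDup_ForallPairs; [|apply seq_NoDup].
    intros x y Hx Hy; apply in_seq in Hx; apply in_seq in Hy; apply H2; lia.
Qed.

Lemma nth0_perm_comp_map g n f j :
  (j < n)%nat -> nth0 (perm_comp g (map f (seq 0 n))) j = nth0 g (f j).
Proof.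
  intros Hj. unfold perm_comp, nth0. rewrite map_map.
  rewrite (nth_indep _ 0%nat (nth (f 0%nat) g 0%nat)) by (rewrite length_map, length_seq; auto).
  rewrite (map_nth (fun x => nth (f x) g 0%nat)), seq_nth; auto.
Qed.

Lemma sumR_nth0 (g : list nat) W : sumR g W = sumR (seq 0 (length g)) (fun q => W (nth0 g q)).
Proof.
  induction g as [|x g IH]; [reflexivity|].
  rewrite length_cons, sumR_seq_S, sumR_cons, IH. reflexivity.
Qed.

Lemma sumR_seq_bij m (f : nat -> nat) F : (forall j, (j < m)%nat -> (f j < m)%nat) ->
  (forall i j, (i < m)%nat -> (j < m)%nat -> f i = f j -> i = j) ->
  sumR (seq 0 m) (fun j => F (f j)) = sumR (seq 0 m) F.
Proof.
  intros Hf Hinj. assert (Hm := avg_bij (seq 0 m) f F (seq_NoDup m 0)).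
  unfold avg in Hm. rewrite length_seq in Hm.
  destruct m as [|m]; [reflexivity|].
  apply (Rmult_eq_reg_r (/ INR (S m))); [|apply Rinv_neq_0_compat, not_0_INR; lia].
  apply Hm.
  - intros x Hx; apply in_seq in Hx; apply in_seq; specialize (Hf x); lia.
  - intros x y Hx Hy; apply in_seq in Hx; apply in_seq in Hy; apply Hinj; lia.
Qed.

(** * Uniform [m]-subsets as prefixes of uniform permutations *)

Lemma ssorted_head_lt a l : StronglySorted lt (a :: l) -> forall x, In x l -> (a < x)%nat.
Proof. intros H x Hx. inversion H as [|? ? _ Hall]; subst. eapply Forall_forall in Hall; eauto. Qed.

Lemma ssorted_NoDup l : StronglySorted lt l -> NoDup l.
Proof.
  induction l as [|a l IH]; intros H; constructor.
  - intros Ha. pose proof (ssorted_head_lt a l H a Ha). lia.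
  - inversion H; auto.
Qed.

Lemma ssorted_filter_seq f a n : StronglySorted lt (filter f (seq a n)).
Proof.
  revert a; induction n as [|n IH]; intros a; simpl; [constructor|].
  destruct (f a); auto. constructor; auto.
  apply Forall_forall; intros x Hx. apply filter_In in Hx as [Hx _]. apply in_seq in Hx; lia.
Qed.

Lemma ssorted_ext l1 l2 : StronglySorted lt l1 -> StronglySorted lt l2 ->
  (forall x, In x l1 <-> In x l2) -> l1 = l2.
Proof.
  revert l2; induction l1 as [|a l1 IH]; intros l2 H1 H2 He.
  - destruct l2 as [|b l2]; auto. exfalso. apply (proj2 (He b)); left; auto.
  - destruct l2 as [|b l2]; [exfalso; apply (proj1 (He a)); left; auto|].
    pose proof (ssorted_head_lt _ _ H1) as F1. pose proof (ssorted_head_lt _ _ H2) as F2.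
    assert (a = b).
    { destruct (proj1 (He a) (or_introl eq_refl)) as [|Ha]; auto.
      destruct (proj2 (He b) (or_introl eq_refl)) as [|Hb]; auto.
      specialize (F1 _ Hb); specialize (F2 _ Ha). lia. }
    subst. f_equal. inversion H1; inversion H2; subst. apply IH; auto. intros x. split; intros Hx.
    + destruct (proj1 (He x) (or_intror Hx)) as [<-|]; auto. specialize (F1 _ Hx); lia.
    + destruct (proj2 (He x) (or_intror Hx)) as [<-|]; auto. specialize (F2 _ Hx); lia.
Qed.

Lemma msubsets_from_spec lo n m s : In s (msubsets_from lo n m) <->
  StronglySorted lt s /\ length s = m /\ (forall x, In x s -> (lo <= x < lo + n)%nat).
Proof.
  revert lo m s. induction n as [|n IH]; intros lo m s.
  - destruct m; simpl.
    + split; [intros [<-|[]]; split; [constructor | split; [auto | intros x []]]|].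
      intros [_ [Hs _]]. destruct s; simpl in *; auto; lia.
    + split; [intros []|]. intros [_ [H1 H2]]. destruct s as [|x s]; simpl in *; [lia|].
      specialize (H2 x (or_introl eq_refl)); lia.
  - destruct m as [|m]; simpl.
    + split; [intros [<-|[]]; split; [constructor | split; [auto | intros x []]]|].
      intros [_ [Hs _]]. destruct s; simpl in *; auto; lia.
    + rewrite in_app_iff, in_map_iff. split.
      * intros [[s' [<- Hs]] | Hs]; apply IH in Hs as [H1 [H2 H3]].
        -- split; [|split].
           ++ constructor; auto. apply Forall_forall; intros y Hy; specialize (H3 y Hy); lia.
           ++ simpl; auto.
           ++ intros y [<-|Hy]; [lia|]. specialize (H3 y Hy); lia.
        -- split; [auto|split; [auto|]]. intros y Hy; specialize (H3 y Hy); lia.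
      * intros [H1 [H2 H3]]. destruct s as [|a s']; simpl in H2; [lia|].
        assert (Ha := H3 a (or_introl eq_refl)). pose proof (ssorted_head_lt _ _ H1) as F.
        destruct (Nat.eq_dec a lo) as [->|Hne].
        -- left. exists s'. split; auto. apply IH. inversion H1; subst. split; auto. split; [lia|].
           intros x Hx. specialize (F x Hx). specialize (H3 x (or_intror Hx)). lia.
        -- right. apply IH. split; auto. split; auto. intros x [<-|Hx]; [lia|].
           specialize (F x Hx). specialize (H3 x (or_intror Hx)). lia.
Qed.

Lemma msubsets_from_NoDup lo n m : NoDup (msubsets_from lo n m).
Proof.
  revert lo m. induction n as [|n IH]; intros lo m;
    destruct m; simpl; try (constructor; auto; constructor).
  apply NoDup_app; auto.
  - apply NoDup_map_NoDup_ForallPairs; auto. intros x y _ _ E; injection E; auto.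
  - intros s H1 H2. apply in_map_iff in H1 as [s' [<- _]].
    apply msubsets_from_spec in H2 as [_ [_ H2]]. specialize (H2 lo (or_introl eq_refl)). lia.
Qed.

Lemma in_msubsets n m s : In s (msubsets n m) ->
  NoDup s /\ length s = m /\ (forall x, In x s -> (x < n)%nat).
Proof.
  intros H. apply msubsets_from_spec in H as [H1 [H2 H3]].
  split; [apply ssorted_NoDup; auto|]. split; auto. intros x Hx; specialize (H3 x Hx); lia.
Qed.

Lemma msubsets_not_nil n m : (m <= n)%nat -> msubsets n m <> [].
Proof.
  intros Hmn E. assert (Hin : In (seq 0 m) (msubsets n m)).
  { apply msubsets_from_spec. rewrite <- (List.filter_true (seq 0 m)).
    split; [apply ssorted_filter_seq|]. rewrite List.filter_true, length_seq.
    split; auto. intros x Hx; apply in_seq in Hx; lia. }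
  rewrite E in Hin; auto.
Qed.

Definition memb (l : list nat) (j : nat) : bool := if in_dec Nat.eq_dec j l then true else false.

Definition sort_below (n : nat) (l : list nat) : list nat := filter (memb l) (seq 0 n).

Lemma sort_below_perm n l :
  NoDup l -> (forall x, In x l -> (x < n)%nat) -> Permutation (sort_below n l) l.
Proof.
  intros Hl Hn. apply NoDup_Permutation; auto; [apply NoDup_filter, seq_NoDup|].
  intros x. unfold sort_below, memb. rewrite filter_In, in_seq.
  destruct (in_dec Nat.eq_dec x l); split; try tauto; [|intros [_ ?]; discriminate].
  intros; specialize (Hn x i); repeat split; auto; lia.
Qed.

Lemma sort_below_in_msubsets n m l : NoDup l -> length l = m ->
  (forall x, In x l -> (x < n)%nat) -> In (sort_below n l) (msubsets n m).
Proof.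
  intros H1 H2 H3. apply msubsets_from_spec. split; [apply ssorted_filter_seq|]. split.
  - rewrite (Permutation_length (sort_below_perm n l H1 H3)); auto.
  - intros x Hx. apply filter_In in Hx as [Hx _]. apply in_seq in Hx. lia.
Qed.

Lemma map_nth0_props n m g s : In g (perms n) -> In s (msubsets n m) ->
  NoDup (map (nth0 g) s) /\ length (map (nth0 g) s) = m /\
  (forall x, In x (map (nth0 g) s) -> (x < n)%nat).
Proof.
  intros Hg Hs. destruct (in_msubsets _ _ _ Hs) as [S1 [S2 S3]]. split; [|split].
  - apply NoDup_map_NoDup_ForallPairs; auto. intros x y Hx Hy. apply (nth0_inj n); auto.
  - rewrite length_map; auto.
  - intros x Hx. apply in_map_iff in Hx as [j [<- Hj]]. apply (nth0_lt n); auto.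
Qed.

(** A permutation [g] induces a bijection [s |-> g(s)] of the [m]-subsets. *)
Lemma avg_msubsets_image n m g (G : list nat -> R) : In g (perms n) ->
  (forall s s', Permutation s s' -> G s = G s') ->
  avg (msubsets n m) G = avg (msubsets n m) (fun s => G (map (nth0 g) s)).
Proof.
  intros Hg HG.
  transitivity (avg (msubsets n m) (fun s => G (sort_below n (map (nth0 g) s)))).
  - symmetry. apply avg_bij; [apply msubsets_from_NoDup| |].
    + intros s Hs. destruct (map_nth0_props n m g s Hg Hs) as [P1 [P2 P3]].
      apply sort_below_in_msubsets; auto.
    + intros s s' Hs Hs' E.
      destruct (map_nth0_props n m g s Hg Hs) as [P1 [_ P3]].
      destruct (map_nth0_props n m g s' Hg Hs') as [P1' [_ P3']].
      pose proof (sort_below_perm _ _ P1 P3) as Q1. pose proof (sort_below_perm _ _ P1' P3') as Q2.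
      rewrite E in Q1.
      assert (Himg : forall x, In x (map (nth0 g) s) <-> In x (map (nth0 g) s')).
      { intros x. split; intros Hx.
        - apply (Permutation_in _ Q2), (Permutation_in _ (Permutation_sym Q1)); auto.
        - apply (Permutation_in _ Q1), (Permutation_in _ (Permutation_sym Q2)); auto. }
      destruct (in_msubsets _ _ _ Hs) as [_ [_ S3]]. destruct (in_msubsets _ _ _ Hs') as [_ [_ S3']].
      apply msubsets_from_spec in Hs as [SS1 _]. apply msubsets_from_spec in Hs' as [SS2 _].
      apply ssorted_ext; auto. intros j. split; intros Hj.
      * destruct (in_map_iff (nth0 g) s' (nth0 g j)) as [[j' [E' Hj']] _];
          [apply Himg, in_map; auto|]. apply (nth0_inj n g) in E'; auto. subst; auto.
      * destruct (in_map_iff (nth0 g) s (nth0 g j)) as [[j' [E' Hj']] _];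
          [apply Himg, in_map; auto|]. apply (nth0_inj n g) in E'; auto. subst; auto.
  - apply avg_ext; intros s Hs. apply HG. destruct (map_nth0_props n m g s Hg Hs) as [P1 [P2 P3]].
    apply sort_below_perm; auto.
Qed.

Definition complete_perm (n : nat) (s : list nat) : list nat :=
  s ++ filter (fun j => negb (memb s j)) (seq 0 n).

Lemma complete_perm_in_perms n m s : In s (msubsets n m) -> In (complete_perm n s) (perms n).
Proof.
  intros Hs. destruct (in_msubsets _ _ _ Hs) as [S1 [S2 S3]]. apply in_perms_iff.
  assert (Hsplit : forall (f : nat -> bool) l,
            Permutation (filter f l ++ filter (fun x => negb (f x)) l) l).
  { intros f l. induction l as [|a l IH]; simpl; auto. destruct (f a); simpl; [constructor; auto|].
    eapply perm_trans; [apply Permutation_sym, Permutation_middle|]. constructor; auto. }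
  eapply perm_trans; [|apply (Hsplit (memb s))]. apply Permutation_app_tail.
  apply Permutation_sym, sort_below_perm; auto.
Qed.

Lemma avg_msubsets_eq_avg_perms_firstn n m (G : list nat -> R) : (m <= n)%nat ->
  (forall s s', Permutation s s' -> G s = G s') ->
  avg (msubsets n m) G = avg (perms n) (fun g => G (firstn m g)).
Proof.
  intros Hmn HG.
  transitivity (avg (perms n) (fun g => avg (msubsets n m) (fun s => G (map (nth0 g) s)))).
  { rewrite <- (avg_const (perms n) (avg (msubsets n m) G)) by apply perms_not_nil.
    apply avg_ext; intros g Hg. apply avg_msubsets_image; auto. }
  rewrite avg_comm.
  rewrite <- (avg_const (msubsets n m) (avg (perms n) (fun g => G (firstn m g))))
    by (apply msubsets_not_nil; auto).
  apply avg_ext; intros s Hs.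
  rewrite <- (avg_perm_comp n (complete_perm n s) (fun g => G (firstn m g)))
    by (eapply complete_perm_in_perms; eauto).
  apply avg_ext; intros g Hg. f_equal. unfold perm_comp, complete_perm.
  destruct (in_msubsets _ _ _ Hs) as [_ [S2 _]].
  rewrite map_app, firstn_app, length_map, S2, Nat.sub_diag, app_nil_r, firstn_all2; auto.
  rewrite length_map; lia.
Qed.

Lemma Rsup_is_lub (E : R -> Prop) : bound E -> (exists x, E x) -> is_lub E (Rsup E).
Proof.
  intros Hb He. destruct (completeness E Hb He) as [s Hs].
  unfold Rsup. apply epsilon_spec. exists s; auto.
Qed.

Section SupH.
Variable X : Type.
Variable H : (X -> bool) -> Prop.
Hypothesis H_nonempty : exists h, H h.

Definition supH (g : (X -> bool) -> R) : R := Rsup (fun v => exists h, H h /\ v = g h).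
Definition boundedH (g : (X -> bool) -> R) : Prop := exists M, forall h, H h -> Rabs (g h) <= M.

Lemma supH_is_lub g : boundedH g -> is_lub (fun v => exists h, H h /\ v = g h) (supH g).
Proof.
  intros [M HM]. apply Rsup_is_lub.
  - exists M. intros v [h [Hh ->]]. specialize (HM h Hh). pose proof (Rle_abs (g h)); lra.
  - destruct H_nonempty as [h Hh]. exists (g h), h; auto.
Qed.

Lemma supH_ub g h : boundedH g -> H h -> g h <= supH g.
Proof. intros Hb Hh. apply (proj1 (supH_is_lub g Hb)). exists h; auto. Qed.

Lemma supH_le g c : boundedH g -> (forall h, H h -> g h <= c) -> supH g <= c.
Proof. intros Hb Hc. apply (proj2 (supH_is_lub g Hb)). intros v [h [Hh ->]]; auto. Qed.

Lemma supH_mono g1 g2 : boundedH g1 -> boundedH g2 ->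
  (forall h, H h -> g1 h <= g2 h) -> supH g1 <= supH g2.
Proof. intros B1 B2 Hle. apply supH_le; auto. intros h Hh. eapply Rle_trans; [apply Hle; auto|]. apply supH_ub; auto. Qed.

Lemma supH_ext g1 g2 : boundedH g1 -> boundedH g2 ->
  (forall h, H h -> g1 h = g2 h) -> supH g1 = supH g2.
Proof. intros B1 B2 He. apply Rle_antisym; apply supH_mono; auto; intros h Hh; rewrite He; auto; lra. Qed.

Lemma supH_plus g1 g2 : boundedH g1 -> boundedH g2 ->
  supH (fun h => g1 h + g2 h) <= supH g1 + supH g2.
Proof.
  intros [M1 B1] [M2 B2]. apply supH_le.
  - exists (M1 + M2). intros h Hh. eapply Rle_trans; [apply Rabs_triang|].
    specialize (B1 h Hh); specialize (B2 h Hh); lra.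
  - intros h Hh. apply Rplus_le_compat; apply supH_ub; auto; [exists M1 | exists M2]; auto.
Qed.

Lemma boundedH_plus g1 g2 : boundedH g1 -> boundedH g2 -> boundedH (fun h => g1 h + g2 h).
Proof.
  intros [M1 B1] [M2 B2]. exists (M1 + M2); intros h Hh.
  eapply Rle_trans; [apply Rabs_triang|]. specialize (B1 h Hh); specialize (B2 h Hh); lra.
Qed.

Lemma boundedH_scal c g : boundedH g -> boundedH (fun h => c * g h).
Proof.
  intros [M B]. exists (Rabs c * M); intros h Hh. rewrite Rabs_mult.
  apply Rmult_le_compat_l; [apply Rabs_pos | auto].
Qed.

Lemma boundedH_minus g1 g2 : boundedH g1 -> boundedH g2 -> boundedH (fun h => g1 h - g2 h).
Proof.
  intros B1 B2. destruct (boundedH_plus g1 (fun h => -1 * g2 h) B1 (boundedH_scal (-1) g2 B2)) as [M HM].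
  exists M. intros h Hh. replace (g1 h - g2 h) with (g1 h + -1 * g2 h) by ring. auto.
Qed.

Lemma boundedH_const c : boundedH (fun _ => c).
Proof. exists (Rabs c); intros; lra. Qed.

Lemma boundedH_sumR {A} (l : list A) (g : A -> (X -> bool) -> R) :
  (forall a, In a l -> boundedH (g a)) -> boundedH (fun h => sumR l (fun a => g a h)).
Proof.
  induction l as [|a l IH]; intros Hg.
  - exists 0; intros; rewrite sumR_nil, Rabs_R0; lra.
  - destruct (boundedH_plus (g a) (fun h => sumR l (fun a0 => g a0 h))) as [M HM].
    + apply Hg; left; auto.
    + apply IH; intros; apply Hg; right; auto.
    + exists M; intros h Hh; rewrite sumR_cons; auto.
Qed.

Lemma boundedH_avg {A} (L : list A) (g : A -> (X -> bool) -> R) :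
  (forall a, In a L -> boundedH (g a)) -> boundedH (fun h => avg L (fun a => g a h)).
Proof.
  intros Hg. unfold avg, Rdiv. destruct (boundedH_sumR L g Hg) as [M HM]. exists (M * Rabs (/ INR (length L))).
  intros h Hh. rewrite Rabs_mult. apply Rmult_le_compat_r; [apply Rabs_pos | auto].
Qed.

Lemma boundedH_loss01 (v : X -> bool) (x : X) : boundedH (fun h => loss01 (h x) (v x)).
Proof. exists 1; intros h _. unfold loss01. destruct (Bool.eqb _ _); rewrite ?Rabs_R0, ?Rabs_R1; lra. Qed.

Lemma supH_scal c g : 0 <= c -> boundedH g -> supH (fun h => c * g h) <= c * supH g.
Proof.
  intros Hc Hb. apply supH_le; [apply boundedH_scal; auto|].
  intros h Hh. apply Rmult_le_compat_l; auto. apply supH_ub; auto.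
Qed.

Lemma supH_avg {A} (L : list A) (g : A -> (X -> bool) -> R) :
  (forall a, In a L -> boundedH (g a)) ->
  supH (fun h => avg L (fun a => g a h)) <= avg L (fun a => supH (g a)).
Proof.
  intros Hb. apply supH_le; [apply boundedH_avg; auto|].
  intros h Hh. apply avg_le. intros a Ha. apply supH_ub; auto.
Qed.

End SupH.

(** * Hoeffding's lemma for Rademacher sums *)

Lemma monotone_of_deriv_nonneg (f f' : R -> R) a :
  (forall x, is_derive f x (f' x)) -> (forall x, a <= x -> 0 <= f' x) ->
  forall x, a <= x -> f a <= f x.
Proof.
  intros Hd Hp x [Hx | <-]; [|lra].
  pose (pr := fun y => exist (fun l => derivable_pt_abs f y l) (f' y)
                         (proj1 (is_derive_Reals f y (f' y)) (Hd y)) : derivable_pt f y).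
  destruct (MVT_cor1 f a x pr Hx) as [c [Hc1 Hc2]].
  change (derive_pt f c (pr c)) with (f' c) in Hc1.
  assert (0 <= f' c) by (apply Hp; lra). nra.
Qed.

Lemma sinh_le_mul_cosh w : 0 <= w -> (exp w - exp (- w)) / 2 <= w * ((exp w + exp (- w)) / 2).
Proof.
  intros Hw.
  assert (Hm := monotone_of_deriv_nonneg
                  (fun w => w * ((exp w + exp (-w)) / 2) - (exp w - exp (-w)) / 2)
                  (fun w => w * ((exp w - exp (-w)) / 2)) 0).
  simpl in Hm. rewrite Ropp_0, exp_0, Rmult_0_l in Hm.
  enough (0 - (1 - 1) / 2 <= w * ((exp w + exp (- w)) / 2) - (exp w - exp (- w)) / 2) by lra.
  apply Hm; auto.
  - intros x. auto_derive; auto. lra.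
  - intros x Hx. apply Rmult_le_pos; auto.
    destruct Hx as [Hx | <-]; [|rewrite Ropp_0; lra].
    pose proof (exp_increasing (-x) x ltac:(lra)). lra.
Qed.

Lemma cosh_le_exp_half_sq_nonneg v : 0 <= v -> (exp v + exp (- v)) / 2 <= exp (v ^ 2 / 2).
Proof.
  intros Hv.
  (* [cosh w * exp (- w^2/2)] is nonincreasing on [w >= 0], by [sinh_le_mul_cosh] *)
  assert (Hm := monotone_of_deriv_nonneg
                  (fun w => 1 - ((exp w + exp (-w)) / 2) * exp (- (w ^ 2 / 2)))
                  (fun w => exp (- (w ^ 2 / 2))
                            * (w * ((exp w + exp (-w)) / 2) - (exp w - exp (-w)) / 2)) 0).
  simpl in Hm.
  assert (H0 : 1 - (exp 0 + exp (- 0)) / 2 * exp (- (0 * (0 * 1) / 2)) = 0).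
  { replace (- (0 * (0 * 1) / 2)) with 0 by lra. rewrite Ropp_0, exp_0. lra. }
  rewrite H0 in Hm.
  assert (H1 : 0 <= 1 - (exp v + exp (- v)) / 2 * exp (- (v * (v * 1) / 2))).
  { apply Hm; auto.
    - intros x. auto_derive; auto. lra.
    - intros x Hx. apply Rmult_le_pos; [left; apply exp_pos|].
      pose proof (sinh_le_mul_cosh x Hx). lra. }
  assert (E : exp (- (v * (v * 1) / 2)) * exp (v ^ 2 / 2) = 1).
  { rewrite <- exp_plus. replace (- (v * (v * 1) / 2) + v ^ 2 / 2) with 0 by field. apply exp_0. }
  pose proof (exp_pos (v ^ 2 / 2)). nra.
Qed.

Lemma cosh_le_exp_half_sq (u : R) : (exp u + exp (- u)) / 2 <= exp (u ^ 2 / 2).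
Proof.
  destruct (Rle_dec 0 u) as [Hu|Hu]; [apply cosh_le_exp_half_sq_nonneg; auto|].
  replace (u ^ 2) with ((- u) ^ 2) by ring.
  replace ((exp u + exp (- u)) / 2) with ((exp (- u) + exp (- - u)) / 2)
    by (rewrite Ropp_involutive; lra).
  apply cosh_le_exp_half_sq_nonneg; lra.
Qed.

Fixpoint sign_vectors (L : nat) : list (list bool) :=
  match L with
  | O => [[]]
  | S L' => map (cons false) (sign_vectors L') ++ map (cons true) (sign_vectors L')
  end.

Lemma sign_vectors_spec L b : In b (sign_vectors L) <-> length b = L.
Proof.
  revert b; induction L as [|L IH]; intros b; simpl.
  - split; [intros [<-|[]]; auto | destruct b; simpl; auto; lia].
  - rewrite in_app_iff, !in_map_iff. split.
    + intros [[b' [<- Hb]]|[b' [<- Hb]]]; apply IH in Hb; simpl; auto.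
    + intros Hb. destruct b as [|x b']; simpl in Hb; [lia|]. injection Hb; intros Hb'.
      destruct x; [right|left]; exists b'; split; auto; apply IH; auto.
Qed.

Lemma sign_vectors_NoDup L : NoDup (sign_vectors L).
Proof.
  induction L as [|L IH]; simpl; [constructor; auto; constructor|]. apply NoDup_app.
  1,2: apply NoDup_map_NoDup_ForallPairs; auto; intros x y _ _ E; injection E; auto.
  intros a H1 H2. apply in_map_iff in H1 as [? [<- _]]. apply in_map_iff in H2 as [? [E _]].
  discriminate.
Qed.

Lemma sign_vectors_not_nil L : sign_vectors L <> [].
Proof.
  intro E. assert (Hin : In (repeat false L) (sign_vectors L))
    by (apply sign_vectors_spec, repeat_length).
  rewrite E in Hin; auto.
Qed.

Lemma avg_sign_vectors_S L F : avg (sign_vectors (S L)) F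
  = (avg (sign_vectors L) (fun b => F (false :: b)) + avg (sign_vectors L) (fun b => F (true :: b))) / 2.
Proof.
  unfold avg. simpl sign_vectors. rewrite sumR_app, !sumR_map, length_app, !length_map, plus_INR.
  pose proof (INR_length_pos _ (sign_vectors_not_nil L)). field. lra.
Qed.

Definition sg (b : bool) : R := if b then -1 else 1.

Lemma avg_exp_signed_sum_le p (v : nat -> R) lam :
  avg (sign_vectors p) (fun b => exp (lam * sumR (seq 0 p) (fun j => sg (nth j b false) * v j)))
  <= exp (lam ^ 2 / 2 * sumR (seq 0 p) (fun j => v j ^ 2)).
Proof.
  revert v. induction p as [|p IH]; intros v.
  - cbn [seq]. rewrite (avg_ext _ _ (fun _ => 1)) by (intros; rewrite sumR_nil, Rmult_0_r; apply exp_0).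
    rewrite avg_const by (simpl; congruence). rewrite sumR_nil, Rmult_0_r, exp_0. lra.
  - rewrite avg_sign_vectors_S, sumR_seq_S.
    assert (Hsplit : forall b0, (fun b => exp (lam * sumR (seq 0 (S p)) (fun j => sg (nth j (b0 :: b) false) * v j)))
      = (fun b => exp (lam * sg b0 * v 0%nat)
                  * exp (lam * sumR (seq 0 p) (fun j => sg (nth j b false) * v (S j))))).
    { intros b0. apply functional_extensionality; intros b.
      rewrite sumR_seq_S, <- exp_plus. f_equal. simpl. ring. }
    rewrite !Hsplit, !avg_scal. specialize (IH (fun j => v (S j))).
    set (A0 := avg _ _) in *.
    assert (0 <= A0) by (apply avg_nonneg; intros; left; apply exp_pos).
    rewrite Rmult_plus_distr_l, exp_plus.
    pose proof (cosh_le_exp_half_sq (lam * v 0%nat)).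
    unfold sg. replace (lam ^ 2 / 2 * v 0%nat ^ 2) with ((lam * v 0%nat) ^ 2 / 2) by field.
    transitivity ((exp (lam * v 0%nat) + exp (- (lam * v 0%nat))) / 2 * A0);
      [right; replace (lam * -1 * v 0%nat) with (- (lam * v 0%nat)) by ring;
       replace (lam * 1 * v 0%nat) with (lam * v 0%nat) by ring; field|].
    apply Rmult_le_compat; auto.
    pose proof (exp_pos (lam * v 0%nat)); pose proof (exp_pos (- (lam * v 0%nat))). lra.
Qed.

(** * Massart's finite class lemma *)

Lemma exp_le_exp x y : x <= y -> exp x <= exp y.
Proof. intros [Hlt | ->]; [left; apply exp_increasing; auto | lra]. Qed.

Lemma ln_le_ln x y : 0 < x -> x <= y -> ln x <= ln y.
Proof. intros Hx [Hlt | ->]; [left; apply ln_increasing; auto | lra]. Qed.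

(** The choice [lam = sqrt (2 B / R2)] minimizes [(B + lam^2 R2 / 2) / lam]. *)
Lemma chernoff_optimum R2 B : 0 < R2 -> 0 < B ->
  let lam := sqrt (2 * B) / sqrt R2 in
  / lam * (B + lam ^ 2 / 2 * R2) = sqrt R2 * sqrt (2 * B).
Proof.
  intros HR HB lam.
  assert (E1 : sqrt R2 * sqrt R2 = R2) by (apply sqrt_sqrt; lra).
  assert (E2 : sqrt (2 * B) * sqrt (2 * B) = 2 * B) by (apply sqrt_sqrt; lra).
  assert (P1 : 0 < sqrt R2) by (apply sqrt_lt_R0; lra).
  assert (P2 : 0 < sqrt (2 * B)) by (apply sqrt_lt_R0; lra).
  unfold lam. set (a := sqrt (2 * B)) in *. set (r := sqrt R2) in *.
  replace B with (a * a / 2) at 1 by lra. rewrite <- E1. field. lra.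
Qed.

Section Massart.
Variable X : Type.
Variable H : (X -> bool) -> Prop.
Hypothesis H_nonempty : exists h, H h.
Variable I : list nat.
Hypothesis I_NoDup : NoDup I.
Variable p : nat.
Variable u : (X -> bool) -> nat -> nat -> R.

Definition rademacher_sum (sigma : nat -> list bool) (h : X -> bool) : R :=
  sumR I (fun i => sumR (seq 0 p) (fun j => sg (nth j (sigma i) false) * u h i j)).

Definition sign_space : list (nat -> list bool) := prod_space I (sign_vectors p) [].

Lemma sign_space_not_nil : sign_space <> [].
Proof. apply prod_space_not_nil, sign_vectors_not_nil. Qed.

Lemma avg_exp_rademacher_sum_le h lam :
  avg sign_space (fun sigma => exp (lam * rademacher_sum sigma h))
  <= exp (lam ^ 2 / 2 * sumR I (fun i => sumR (seq 0 p) (fun j => u h i j ^ 2))).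
Proof.
  unfold rademacher_sum, sign_space. rewrite <- sumR_scal.
  rewrite (avg_ext _ _ (fun sigma => exp (sumR I (fun i =>
             lam * sumR (seq 0 p) (fun j => sg (nth j (sigma i) false) * u h i j)))))
    by (intros; rewrite sumR_scal; auto).
  apply (avg_prod_space_exp_sum_le (sign_vectors p) [] I
           (fun i b => lam * sumR (seq 0 p) (fun j => sg (nth j b false) * u h i j))); auto.
  - apply sign_vectors_not_nil.
  - intros i _. apply avg_exp_signed_sum_le.
Qed.

Variable Vh : list (X -> bool).
Hypothesis Vh_in_H : forall h', In h' Vh -> H h'.
Hypothesis Vh_covers : forall h, H h ->
  exists h', In h' Vh /\ forall i j, In i I -> (j < p)%nat -> u h i j = u h' i j.

Lemma rademacher_sum_cover sigma h : H h ->
  exists h', In h' Vh /\ rademacher_sum sigma h = rademacher_sum sigma h'.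
Proof.
  intros Hh. destruct (Vh_covers h Hh) as [h' [Hh' He]]. exists h'; split; auto.
  apply sumR_ext; intros i Hi. apply sumR_ext; intros j Hj. apply in_seq in Hj.
  rewrite He; auto; lia.
Qed.

Lemma boundedH_rademacher_sum sigma : boundedH X H (rademacher_sum sigma).
Proof.
  exists (sumR Vh (fun h' => Rabs (rademacher_sum sigma h'))). intros h Hh.
  destruct (rademacher_sum_cover sigma h Hh) as [h' [Hh' ->]].
  apply (sumR_ge_elem Vh (fun h' => Rabs (rademacher_sum sigma h'))); auto.
  intros; apply Rabs_pos.
Qed.

Lemma supH_rademacher_sum_le_ln_sum_exp sigma lam : 0 < lam ->
  supH X H (rademacher_sum sigma)
  <= / lam * ln (sumR Vh (fun h' => exp (lam * rademacher_sum sigma h'))).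
Proof.
  intros Hlam. apply supH_le; [auto | apply boundedH_rademacher_sum |]. intros h Hh.
  destruct (rademacher_sum_cover sigma h Hh) as [h' [Hh' ->]].
  apply (Rmult_le_reg_l lam); auto. rewrite <- Rmult_assoc, Rinv_r, Rmult_1_l by lra.
  rewrite <- (ln_exp (lam * rademacher_sum sigma h')). apply ln_le_ln; [apply exp_pos|].
  apply (sumR_ge_elem Vh (fun h' => exp (lam * rademacher_sum sigma h'))); auto.
  intros; left; apply exp_pos.
Qed.

Lemma massart_finite_class (R2 B : R) :
  (forall h, H h -> sumR I (fun i => sumR (seq 0 p) (fun j => u h i j ^ 2)) <= R2) ->
  0 < R2 -> 0 < B -> ln (INR (length Vh)) <= B ->
  avg sign_space (fun sigma => supH X H (rademacher_sum sigma)) <= sqrt R2 * sqrt (2 * B).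
Proof.
  intros Hsq HR2 HB Hln.
  assert (HVne : Vh <> []).
  { destruct H_nonempty as [h Hh]. destruct (Vh_covers h Hh) as [h' [Hh' _]].
    intro E; rewrite E in Hh'; auto. }
  set (lam := sqrt (2 * B) / sqrt R2).
  assert (Hlam : 0 < lam) by (apply Rdiv_lt_0_compat; apply sqrt_lt_R0; lra).
  set (Z := fun sigma => sumR Vh (fun h' => exp (lam * rademacher_sum sigma h'))).
  assert (HZpos : forall sigma, 0 < Z sigma).
  { intros sigma. destruct Vh as [|h0 Vt]; [congruence|].
    apply (Rlt_le_trans _ (exp (lam * rademacher_sum sigma h0))); [apply exp_pos|].
    apply (sumR_ge_elem _ (fun h' => exp (lam * rademacher_sum sigma h'))); [left; auto|].
    intros; left; apply exp_pos. }
  assert (HEZ : avg sign_space Z <= INR (length Vh) * exp (lam ^ 2 / 2 * R2)).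
  { unfold Z. rewrite avg_sumR, <- sumR_const. apply sumR_le. intros h' Hh'.
    eapply Rle_trans; [apply avg_exp_rademacher_sum_le|]. apply exp_le_exp.
    apply Rmult_le_compat_l; [apply Rmult_le_pos; [apply pow2_ge_0 | lra]|].
    apply Hsq, Vh_in_H; auto. }
  transitivity (avg sign_space (fun sigma => / lam * ln (Z sigma))).
  { apply avg_le; intros sigma _. apply supH_rademacher_sum_le_ln_sum_exp; auto. }
  rewrite avg_scal. pose proof (INR_length_pos _ HVne).
  transitivity (/ lam * ln (INR (length Vh) * exp (lam ^ 2 / 2 * R2))).
  { apply Rmult_le_compat_l; [left; apply Rinv_0_lt_compat; auto|].
    eapply Rle_trans; [apply avg_ln_le; auto; apply sign_space_not_nil|].
    apply ln_le_ln; auto. apply avg_pos; auto. apply sign_space_not_nil. }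
  rewrite ln_mult, ln_exp by (auto; apply exp_pos).
  transitivity (/ lam * (B + lam ^ 2 / 2 * R2)).
  { apply Rmult_le_compat_l; [left; apply Rinv_0_lt_compat; auto | lra]. }
  right. apply (chernoff_optimum R2 B HR2 HB).
Qed.
End Massart.

(** * Pajor's lemma and the Sauer-Shelah bound *)

(** A subset [K] of the positions [{0, ..., L-1}] is encoded as a boolean mask of length [L]. *)
Fixpoint restrict {A} (K : list bool) (l : list A) : list A :=
  match K, l with
  | true :: K', x :: l' => x :: restrict K' l'
  | false :: K', _ :: l' => restrict K' l'
  | _, _ => []
  end.

Fixpoint mask_card (K : list bool) : nat :=
  match K with [] => O | b :: K' => ((if b then 1 else 0) + mask_card K')%nat end.

Definition shatters_mask (V : list (list bool)) (K : list bool) : Prop :=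
  forall b, length b = length K -> exists v, In v V /\ restrict K v = restrict K b.

Definition indicator (P : Prop) : R := if excluded_middle_informative P then 1 else 0.

Lemma indicator_mono (P Q : Prop) : (P -> Q) -> indicator P <= indicator Q.
Proof.
  intros HPQ. unfold indicator.
  destruct (excluded_middle_informative P), (excluded_middle_informative Q); try lra; tauto.
Qed.

Lemma indicator_or_and (P Q : Prop) : indicator (P \/ Q) + indicator (P /\ Q) = indicator P + indicator Q.
Proof.
  unfold indicator. destruct (excluded_middle_informative P), (excluded_middle_informative Q),
    (excluded_middle_informative (P \/ Q)), (excluded_middle_informative (P /\ Q)); try lra; tauto.
Qed.

Definition shattered_count (L : nat) (V : list (list bool)) : R :=
  sumR (sign_vectors L) (fun K => indicator (shatters_mask V K)).

Definition tails_after (b : bool) (V : list (list bool)) : list (list bool) :=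
  map (@tl bool) (filter (fun v => match v with c :: _ => Bool.eqb c b | [] => false end) V).

Lemma in_tails_after b V w : In w (tails_after b V) <-> In (b :: w) V.
Proof.
  unfold tails_after. rewrite in_map_iff. split.
  - intros [v [<- Hv]]. apply filter_In in Hv as [Hv Hb].
    destruct v as [|c v']; [discriminate|]. apply Bool.eqb_prop in Hb. subst; auto.
  - intros Hv. exists (b :: w); split; auto. apply filter_In; split; auto. apply Bool.eqb_reflx.
Qed.

Lemma tails_after_NoDup b V : NoDup V -> NoDup (tails_after b V).
Proof.
  intros HV. apply NoDup_map_NoDup_ForallPairs; [|apply NoDup_filter; auto].
  intros x y Hx Hy E. apply filter_In in Hx as [_ Hx]. apply filter_In in Hy as [_ Hy].
  destruct x as [|c x']; destruct y as [|c' y']; try discriminate.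
  apply Bool.eqb_prop in Hx, Hy. simpl in E. subst; auto.
Qed.

Lemma length_tails_after V : (forall v, In v V -> v <> []) ->
  length V = (length (tails_after false V) + length (tails_after true V))%nat.
Proof.
  unfold tails_after. induction V as [|v V IH]; intros Hv; simpl; auto.
  destruct v as [|[|] v']; [exfalso; apply (Hv [] (or_introl eq_refl)); auto| |];
    simpl; rewrite IH; auto; try lia; intros; apply Hv; right; auto.
Qed.

Lemma length_le_shattered_count L : forall V, NoDup V ->
  (forall v, In v V -> length v = L) -> INR (length V) <= shattered_count L V.
Proof.
  induction L as [|L IH]; intros V HV Hl.
  - unfold shattered_count; simpl sign_vectors. rewrite sumR_cons, sumR_nil, Rplus_0_r.
    destruct V as [|v V'].
    + simpl. unfold indicator. destruct (excluded_middle_informative _); lra.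
    + assert (V' = []) as ->.
      { destruct V' as [|w V'']; auto. inversion HV as [|? ? Hvw]; subst. exfalso. apply Hvw.
        left. pose proof (Hl v (or_introl eq_refl)). pose proof (Hl w (or_intror (or_introl eq_refl))).
        destruct v, w; simpl in *; auto; lia. }
      unfold indicator. destruct (excluded_middle_informative _) as [|Hn]; [simpl; lra|].
      exfalso; apply Hn. intros b _. exists v; split; [left; auto | destruct b, v; auto].
  - assert (Htl : forall b w, In w (tails_after b V) -> length w = L).
    { intros b w Hw. apply in_tails_after, Hl in Hw. simpl in Hw; lia. }
    pose proof (IH _ (tails_after_NoDup false V HV) (Htl false)) as H0.
    pose proof (IH _ (tails_after_NoDup true V HV) (Htl true)) as H1.
    rewrite (length_tails_after V), plus_INR
      by (intros v Hv E; subst; specialize (Hl _ Hv); simpl in Hl; lia).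
    eapply Rle_trans; [apply Rplus_le_compat; [apply H0 | apply H1]|].
    unfold shattered_count. simpl sign_vectors. rewrite sumR_app, !sumR_map, <- sumR_plus.
    rewrite (sumR_ext _ _ (fun K => indicator (shatters_mask (tails_after false V) K \/
                                               shatters_mask (tails_after true V) K)
                                  + indicator (shatters_mask (tails_after false V) K /\
                                               shatters_mask (tails_after true V) K)))
      by (intros; rewrite indicator_or_and; auto).
    rewrite sumR_plus. apply Rplus_le_compat; apply sumR_le; intros K _; apply indicator_mono.
    (* position 0 unused: either half shatters [K]; position 0 used: both halves do *)
    + intros Hs [|b0 b'] Hb; simpl in Hb; [lia|]. injection Hb; intros Hb'.
      destruct Hs as [Hs|Hs]; destruct (Hs b' Hb') as [v [Hv Hvb]]; apply in_tails_after in Hv;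
        eexists; split; try exact Hv; auto.
    + intros [S0 S1] [|b0 b'] Hb; simpl in Hb; [lia|]. injection Hb; intros Hb'.
      destruct b0; [destruct (S1 b' Hb') as [v [Hv Hvb]] | destruct (S0 b' Hb') as [v [Hv Hvb]]];
        apply in_tails_after in Hv; eexists; split; try exact Hv; simpl; rewrite Hvb; auto.
Qed.

Lemma restrict_map {A B} (f : A -> B) K l : restrict K (map f l) = map f (restrict K l).
Proof. revert l; induction K as [|[|] K IH]; intros l; destruct l as [|x l]; simpl; auto. rewrite IH; auto. Qed.

Lemma length_restrict {A} K (l : list A) : length K = length l -> length (restrict K l) = mask_card K.
Proof.
  revert l; induction K as [|[|] K IH]; intros l E; destruct l as [|x l]; simpl in *;
    try lia; try rewrite IH; auto.
Qed.

Lemma restrict_surj (K c : list bool) : length c = mask_card K ->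
  exists b : list bool, length b = length K /\ restrict K b = c.
Proof.
  revert c; induction K as [|[|] K IH]; intros c Hc; simpl in *.
  - exists []; destruct c; simpl in *; auto; lia.
  - destruct c as [|c0 c']; simpl in Hc; [lia|]. destruct (IH c') as [b [Hb1 Hb2]]; [lia|].
    exists (c0 :: b); simpl; rewrite Hb2; auto.
  - destruct (IH c Hc) as [b [Hb1 Hb2]]. exists (false :: b); simpl; auto.
Qed.

Lemma NoDup_of_all_patterns {X} (P : list X) :
  (forall c, length c = length P -> exists g : X -> bool, map g P = c) -> NoDup P.
Proof.
  induction P as [|x P IH]; intros Hp; constructor.
  - intros Hx. destruct (Hp (true :: map (fun _ => false) P)) as [g Hg];
      [simpl; rewrite length_map; auto|].
    simpl in Hg. injection Hg; intros E1 E2.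
    rewrite (map_eq_in g (fun _ => false) P E1 x Hx) in E2. discriminate.
  - apply IH. intros c Hc. destruct (Hp (false :: c)) as [g Hg]; simpl; auto.
    exists g. simpl in Hg. injection Hg; auto.
Qed.

Lemma sumR_sign_vectors_pow x L : sumR (sign_vectors L) (fun K => x ^ mask_card K) = (1 + x) ^ L.
Proof.
  induction L as [|L IHL]; simpl sign_vectors; [rewrite sumR_cons, sumR_nil; simpl; lra|].
  rewrite sumR_app, !sumR_map. simpl mask_card.
  rewrite (sumR_ext _ (fun K => x ^ (1 + mask_card K)) (fun K => x * x ^ mask_card K)) by reflexivity.
  rewrite sumR_scal, IHL. simpl; ring.
Qed.

Lemma exp_pow_INR a k : exp a ^ k = exp (INR k * a).
Proof.
  induction k as [|k IH]; [simpl; rewrite Rmult_0_l, exp_0; auto|].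
  rewrite S_INR. simpl pow. rewrite IH, <- exp_plus. f_equal; ring.
Qed.

Section SauerShelah.
Variable X : Type.
Variable H : (X -> bool) -> Prop.
Variable d : nat.
Hypothesis H_VCdim : VCdim H d.
Hypothesis d_pos : (1 <= d)%nat.

Definition traces (Q : list X) : list (list bool) :=
  filter (fun b => if excluded_middle_informative (exists h, H h /\ map h Q = b) then true else false)
         (sign_vectors (length Q)).

Lemma in_traces Q b : In b (traces Q) <-> exists h, H h /\ map h Q = b.
Proof.
  unfold traces. rewrite filter_In, sign_vectors_spec.
  destruct (excluded_middle_informative _) as [E|E]; split; try tauto.
  - intros; split; auto. destruct E as [h [_ <-]]; apply length_map.
  - intros [_ F]; discriminate.
Qed.

Lemma mask_card_le_VCdim Q K : length K = length Q -> shatters_mask (traces Q) K -> (mask_card K <= d)%nat.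
Proof.
  intros HK Hs. destruct H_VCdim as [_ Hmax].
  rewrite <- (length_restrict K Q HK). apply Hmax. split.
  - apply NoDup_of_all_patterns. intros c Hc. rewrite (length_restrict K Q HK) in Hc.
    destruct (restrict_surj K c Hc) as [bl [Hb1 Hb2]]. destruct (Hs bl Hb1) as [v [Hv Hsv]].
    apply in_traces in Hv as [h [Hh <-]]. exists h. rewrite <- restrict_map, Hsv; auto.
  - intros b. destruct (Hs (map b Q)) as [v [Hv Hsv]]; [rewrite length_map; auto|].
    apply in_traces in Hv as [h [Hh <-]]. exists h; split; auto. rewrite !restrict_map in Hsv.
    intros x Hx. apply (map_eq_in _ _ _ Hsv); auto.
Qed.

Lemma sauer_shelah (Q : list X) (M : nat) : (length Q <= M)%nat -> (d <= M)%nat ->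
  INR (length (traces Q)) <= (exp 1 * INR M / INR d) ^ d.
Proof.
  intros HQ HdM.
  assert (Hdp : 0 < INR d) by (apply lt_0_INR; lia).
  assert (HMp : 0 < INR M) by (apply lt_0_INR; lia).
  set (x := INR d / INR M).
  assert (Hx : 0 < x <= 1).
  { unfold x; split; [apply Rdiv_lt_0_compat; auto|].
    apply (Rmult_le_reg_r (INR M)); auto. unfold Rdiv; rewrite Rmult_assoc, Rinv_l by lra.
    rewrite Rmult_1_r, Rmult_1_l. apply le_INR; auto. }
  assert (Hxd : 0 < x ^ d) by (apply pow_lt; lra).
  eapply Rle_trans.
  { apply (length_le_shattered_count (length Q)); [apply NoDup_filter, sign_vectors_NoDup|].
    intros v Hv. apply filter_In in Hv as [Hv _]. apply sign_vectors_spec in Hv; auto. }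
  (* each shattered [K] has at most [d] elements, hence weight [x^|K| / x^d >= 1] *)
  transitivity (sumR (sign_vectors (length Q)) (fun K => / x ^ d * x ^ mask_card K)).
  { apply sumR_le. intros K HK. apply sign_vectors_spec in HK. unfold indicator.
    assert (0 <= x ^ mask_card K) by (apply pow_le; lra).
    destruct (excluded_middle_informative _) as [Hs|];
      [|apply Rmult_le_pos; auto; left; apply Rinv_0_lt_compat; auto].
    apply mask_card_le_VCdim in Hs; auto.
    apply (Rmult_le_reg_l (x ^ d)); auto. rewrite <- Rmult_assoc, Rinv_r, Rmult_1_l, Rmult_1_r by lra.
    replace d with (mask_card K + (d - mask_card K))%nat at 1 by lia. rewrite pow_add.
    assert (x ^ (d - mask_card K) <= 1) by (rewrite <- (pow1 (d - mask_card K)); apply pow_incr; lra).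
    nra. }
  rewrite sumR_scal, sumR_sign_vectors_pow.
  transitivity (/ x ^ d * exp (INR d)).
  { apply Rmult_le_compat_l; [left; apply Rinv_0_lt_compat; auto|].
    transitivity ((1 + x) ^ M); [apply Rle_pow; auto; lra|].
    transitivity (exp x ^ M); [apply pow_incr; split; [lra | apply exp_ineq1_le]|].
    rewrite exp_pow_INR. apply exp_le_exp. unfold x. right; field; lra. }
  replace (exp (INR d)) with (exp 1 ^ d) by (rewrite exp_pow_INR; f_equal; ring).
  rewrite <- pow_inv, <- Rpow_mult_distr. unfold x. right. f_equal. field. lra.
Qed.

Lemma finite_representatives (Q : list X) (M : nat) : (length Q <= M)%nat -> (d <= M)%nat ->
  exists Vh : list (X -> bool), (forall h', In h' Vh -> H h') /\
    (forall h, H h -> exists h', In h' Vh /\ map h Q = map h' Q) /\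
    INR (length Vh) <= (exp 1 * INR M / INR d) ^ d.
Proof.
  intros HQ HdM.
  set (rep := fun b => epsilon (inhabits (fun _ : X => true)) (fun h => H h /\ map h Q = b)).
  assert (Hrep : forall b, In b (traces Q) -> H (rep b) /\ map (rep b) Q = b).
  { intros b Hb. apply in_traces in Hb. unfold rep. apply epsilon_spec; auto. }
  exists (map rep (traces Q)). split; [|split].
  - intros h' Hh'. apply in_map_iff in Hh' as [b [<- Hb]]. apply Hrep; auto.
  - intros h Hh. assert (Hb : In (map h Q) (traces Q)) by (apply in_traces; eauto).
    exists (rep (map h Q)). split; [apply in_map; auto | symmetry; apply Hrep; auto].
  - rewrite length_map. apply sauer_shelah; auto.
Qed.
End SauerShelah.

(** * Block rotations and pair swaps *)

Definition shift_mod (m k j : nat) : nat := if j + k <? m then (j + k)%nat else (j + k - m)%nat.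

Lemma shift_mod_lt m k j : (k < m)%nat -> (j < m)%nat -> (shift_mod m k j < m)%nat.
Proof. intros. unfold shift_mod. destruct (Nat.ltb_spec (j + k) m); lia. Qed.

Lemma shift_mod_inj m k i j : (k < m)%nat -> (i < m)%nat -> (j < m)%nat ->
  shift_mod m k i = shift_mod m k j -> i = j.
Proof. intros. unfold shift_mod in *. destruct (Nat.ltb_spec (i + k) m), (Nat.ltb_spec (j + k) m); lia. Qed.

Lemma avg_shift_mod m j (F : nat -> R) : (j < m)%nat ->
  avg (seq 0 m) (fun k => F (shift_mod m j k)) = avg (seq 0 m) F.
Proof.
  intros Hj. unfold avg. f_equal. apply sumR_seq_bij.
  - intros k Hk. apply shift_mod_lt; auto.
  - intros a b Ha Hb E. unfold shift_mod in E.
    destruct (Nat.ltb_spec (a + j) m), (Nat.ltb_spec (b + j) m); lia.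
Qed.

Definition block_rotation (m r k l : nat) : list nat :=
  map (fun j => if j <? m then shift_mod m k j else (m + shift_mod r l (j - m))%nat) (seq 0 (m + r)).

Lemma block_rotation_in_perms m r k l : (k < m)%nat -> (l < r)%nat ->
  In (block_rotation m r k l) (perms (m + r)).
Proof.
  intros Hk Hl. apply map_seq_in_perms.
  - intros j Hj. destruct (Nat.ltb_spec j m); [pose proof (shift_mod_lt m k j)|pose proof (shift_mod_lt r l (j - m))]; lia.
  - intros i j Hi Hj E. destruct (Nat.ltb_spec i m), (Nat.ltb_spec j m).
    + apply (shift_mod_inj m k); auto.
    + pose proof (shift_mod_lt m k i). lia.
    + pose proof (shift_mod_lt m k j). lia.
    + assert (i - m = j - m)%nat by (apply (shift_mod_inj r l); lia). lia.
Qed.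

Lemma avg_block_rotations_pair_gaps (m r p : nat) (g : list nat) (w : nat -> R) :
  (0 < p)%nat -> (p <= m)%nat -> (p <= r)%nat ->
  avg (seq 0 m) (fun k => avg (seq 0 r) (fun l => / INR p * sumR (seq 0 p) (fun j =>
      w (nth0 (perm_comp g (block_rotation m r k l)) (m + j))
      - w (nth0 (perm_comp g (block_rotation m r k l)) j))))
  = avg (seq 0 r) (fun q => w (nth0 g (m + q))) - avg (seq 0 m) (fun q => w (nth0 g q)).
Proof.
  intros Hp Hpm Hpr.
  transitivity (avg (seq 0 m) (fun k => avg (seq 0 r) (fun l => / INR p * sumR (seq 0 p) (fun j =>
      w (nth0 g (m + shift_mod r l j)) - w (nth0 g (shift_mod m k j)))))).
  { apply avg_ext; intros k Hk; apply avg_ext; intros l Hl. apply in_seq in Hk, Hl. f_equal.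
    apply sumR_ext; intros j Hj. apply in_seq in Hj. unfold block_rotation.
    rewrite !nth0_perm_comp_map by lia.
    destruct (Nat.ltb_spec (m + j) m), (Nat.ltb_spec j m); try lia.
    replace (m + j - m)%nat with j by lia. auto. }
  assert (Hshift : forall t j (F : nat -> R), (j < t)%nat ->
            avg (seq 0 t) (fun k => F (shift_mod t k j)) = avg (seq 0 t) F).
  { intros t j F Hj. rewrite <- (avg_shift_mod t j F Hj). apply avg_ext; intros k _.
    unfold shift_mod. rewrite Nat.add_comm. auto. }
  rewrite (avg_ext _ _ (fun k => / INR p * sumR (seq 0 p) (fun j =>
      avg (seq 0 r) (fun l => w (nth0 g (m + shift_mod r l j))) - w (nth0 g (shift_mod m k j))))).
  2:{ intros k _. rewrite avg_scal, avg_sumR. f_equal. apply sumR_ext; intros j _.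
      unfold Rminus. rewrite avg_plus, avg_const by (apply seq_0_not_nil; lia). auto. }
  rewrite avg_scal, avg_sumR.
  rewrite (sumR_ext _ _ (fun _ => avg (seq 0 r) (fun q => w (nth0 g (m + q)))
                                   - avg (seq 0 m) (fun q => w (nth0 g q)))).
  - rewrite sumR_const, length_seq. field. apply not_0_INR; lia.
  - intros j Hj. apply in_seq in Hj. unfold Rminus.
    rewrite avg_plus, avg_const by (apply seq_0_not_nil; lia).
    rewrite (avg_ext _ (fun k => - w (nth0 g (shift_mod m k j))) (fun k => -1 * w (nth0 g (shift_mod m k j))))
      by (intros; ring).
    rewrite avg_scal, (Hshift m j (fun q => w (nth0 g q))), (Hshift r j (fun q => w (nth0 g (m + q)))) by lia.
    ring.
Qed.

Definition pair_swap (m p : nat) (b : list bool) (j : nat) : nat :=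
  if j <? p then (if nth j b false then m + j else j)%nat
  else if (m <=? j) && (j <? m + p) then (if nth (j - m) b false then j - m else j)%nat
  else j.

Definition pair_swap_perm (n m p : nat) (b : list bool) : list nat := map (pair_swap m p b) (seq 0 n).

Lemma pair_swap_invol m p b j : (p <= m)%nat -> pair_swap m p b (pair_swap m p b j) = j.
Proof.
  intros Hpm. unfold pair_swap.
  destruct (Nat.ltb_spec j p).
  - destruct (nth j b false) eqn:E.
    + destruct (Nat.ltb_spec (m + j) p), (Nat.leb_spec m (m + j)), (Nat.ltb_spec (m + j) (m + p));
        try lia. simpl. replace (m + j - m)%nat with j by lia. rewrite E. lia.
    + destruct (Nat.ltb_spec j p); [|lia]. rewrite E; auto.
  - destruct (Nat.leb_spec m j), (Nat.ltb_spec j (m + p)); simpl.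
    + destruct (nth (j - m) b false) eqn:E.
      * destruct (Nat.ltb_spec (j - m) p); [|lia]. rewrite E. lia.
      * destruct (Nat.ltb_spec j p), (Nat.leb_spec m j), (Nat.ltb_spec j (m + p)); try lia.
        simpl. rewrite E; auto.
    + destruct (Nat.ltb_spec j p), (Nat.leb_spec m j), (Nat.ltb_spec j (m + p)); auto; lia.
    + destruct (Nat.ltb_spec j p), (Nat.leb_spec m j); auto; lia.
    + destruct (Nat.ltb_spec j p), (Nat.leb_spec m j); auto; lia.
Qed.

Lemma pair_swap_lt n m p b j : (p <= m)%nat -> (m + p <= n)%nat -> (j < n)%nat ->
  (pair_swap m p b j < n)%nat.
Proof.
  intros. unfold pair_swap. destruct (Nat.ltb_spec j p); [destruct (nth j b false); lia|].
  destruct (Nat.leb_spec m j), (Nat.ltb_spec j (m + p)); simpl; try lia.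
  destruct (nth (j - m) b false); lia.
Qed.

Lemma pair_swap_perm_in_perms n m p b : (p <= m)%nat -> (m + p <= n)%nat ->
  In (pair_swap_perm n m p b) (perms n).
Proof.
  intros. apply map_seq_in_perms; [intros; apply pair_swap_lt; auto|].
  intros i j Hi Hj E. rewrite <- (pair_swap_invol m p b i), <- (pair_swap_invol m p b j), E; auto.
Qed.

Lemma nth0_comp_pair_swap_hi n m p b g j : (p <= m)%nat -> (m + p <= n)%nat -> (j < p)%nat ->
  nth0 (perm_comp g (pair_swap_perm n m p b)) (m + j)
  = if nth j b false then nth0 g j else nth0 g (m + j).
Proof.
  intros. unfold pair_swap_perm. rewrite nth0_perm_comp_map by lia. unfold pair_swap.
  destruct (Nat.ltb_spec (m + j) p), (Nat.leb_spec m (m + j)), (Nat.ltb_spec (m + j) (m + p));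
    try lia. simpl. replace (m + j - m)%nat with j by lia. destruct (nth j b false); auto.
Qed.

Lemma nth0_comp_pair_swap_lo n m p b g j : (p <= m)%nat -> (m + p <= n)%nat -> (j < p)%nat ->
  nth0 (perm_comp g (pair_swap_perm n m p b)) j
  = if nth j b false then nth0 g (m + j) else nth0 g j.
Proof.
  intros. unfold pair_swap_perm. rewrite nth0_perm_comp_map by lia. unfold pair_swap.
  destruct (Nat.ltb_spec j p); [|lia]. destruct (nth j b false); auto.
Qed.

Lemma H_nonempty_of_VCdim {X} (H : (X -> bool) -> Prop) d : VCdim H d -> exists h, H h.
Proof. intros [[P [_ [_ Hsh]]] _]. destruct (Hsh (fun _ => true)) as [h [Hh _]]; eauto. Qed.

Lemma sumR_perm_blocks m r (g : list nat) (w : nat -> R) : In g (perms (m + r)) ->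
  sumR (seq 0 (m + r)) w
  = sumR (seq 0 m) (fun t => w (nth0 g t)) + sumR (seq 0 r) (fun t => w (nth0 g (m + t))).
Proof.
  intros Hg. pose proof Hg as Hlen. apply perms_spec in Hlen as [Hlen _].
  apply in_perms_iff in Hg. rewrite <- (sumR_perm _ _ w Hg), sumR_nth0, Hlen, sumR_seq_add. auto.
Qed.

Lemma sumR_firstn_nth0 m (g : list nat) (w : nat -> R) : (m <= length g)%nat ->
  sumR (firstn m g) w = sumR (seq 0 m) (fun t => w (nth0 g t)).
Proof.
  intros Hm. rewrite sumR_nth0, length_firstn, Nat.min_l by auto.
  apply sumR_ext; intros t Ht. apply in_seq in Ht. unfold nth0. rewrite nth_firstn.
  destruct (Nat.ltb_spec t m); auto; lia.
Qed.

Lemma symmetrization_constant_le (r n p m : nat) (Sg B : R) :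
  (0 < r)%nat -> (0 < p)%nat -> (0 < m)%nat -> (r <= n)%nat -> (r * r * m <= n * n * p)%nat ->
  0 < Sg -> 0 < B ->
  INR r / INR n * (/ INR p * (2 * (sqrt (INR p * Sg / 4) * sqrt (2 * B))))
  <= sqrt Sg * sqrt (2 * B / INR m).
Proof.
  intros Hr Hp Hm Hrn Hrm HS HB.
  assert (Pr : 0 < INR r) by (apply lt_0_INR; lia).
  assert (Pp : 0 < INR p) by (apply lt_0_INR; lia).
  assert (Pm : 0 < INR m) by (apply lt_0_INR; lia).
  assert (Pn : 0 < INR n) by (apply lt_0_INR; lia).
  assert (Hrm' : INR r * INR r * INR m <= INR n * INR n * INR p) by (rewrite <- !mult_INR; apply le_INR; auto).
  set (sp := sqrt (INR p)). set (sm := sqrt (INR m)).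
  assert (Esp : sp * sp = INR p) by (apply sqrt_sqrt; lra).
  assert (Esm : sm * sm = INR m) by (apply sqrt_sqrt; lra).
  assert (Psp : 0 < sp) by (apply sqrt_lt_R0; lra).
  assert (Psm : 0 < sm) by (apply sqrt_lt_R0; lra).
  assert (E1 : sqrt (INR p * Sg / 4) = sp * sqrt Sg / 2).
  { unfold Rdiv. rewrite sqrt_mult_alt, sqrt_mult_alt by (try apply Rmult_le_pos; lra).
    rewrite sqrt_inv. replace 4 with (2 * 2) by ring. rewrite sqrt_square by lra. fold sp. field. }
  rewrite E1, sqrt_div by lra. fold sm.
  set (s1 := sqrt Sg). set (s2 := sqrt (2 * B)).
  assert (P1 : 0 < s1) by (apply sqrt_lt_R0; lra).
  assert (P2 : 0 < s2) by (apply sqrt_lt_R0; lra).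
  assert (Hkey : INR r * sm <= INR n * sp).
  { apply Rsqr_incr_0_var; [unfold Rsqr | nra].
    replace (INR r * sm * (INR r * sm)) with (INR r * INR r * (sm * sm)) by ring.
    replace (INR n * sp * (INR n * sp)) with (INR n * INR n * (sp * sp)) by ring.
    rewrite Esm, Esp; lra. }
  replace (INR r / INR n * (/ INR p * (2 * (sp * s1 / 2 * s2))))
    with ((INR r * sm) * (s1 * s2) / (INR n * sp * sm)) by (rewrite <- Esp; field; lra).
  replace (s1 * (s2 / sm)) with ((INR n * sp) * (s1 * s2) / (INR n * sp * sm)) by (field; lra).
  unfold Rdiv. apply Rmult_le_compat_r; [left; apply Rinv_0_lt_compat; nra|].
  apply Rmult_le_compat_r; nra.
Qed.

(** * The bound for a single weight vector *)

Section SingleTask.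
Variable X : Type.
Variable S : nat -> nat -> X.
Variable f : nat -> X -> bool.
Variable H : (X -> bool) -> Prop.
Variables n m d : nat.
Variable I : list nat.
Variable a : nat -> R.
Hypothesis H_VCdim : VCdim H d.
Hypothesis d_pos : (1 <= d)%nat.
Hypothesis d_le_m : (d <= m)%nat.
Hypothesis m_le_n : (m <= n)%nat.
Hypothesis I_NoDup : NoDup I.
Hypothesis a_sum : sumR I a = 1.

Let H_nonempty := H_nonempty_of_VCdim H d H_VCdim.

Definition loss_at (h : X -> bool) (i q : nat) : R := loss01 (h (S i q)) (f i (S i q)).

Definition deviation (x : nat -> list nat) (h : X -> bool) : R :=
  er_tilde_w S f n I a h - er_hat_w S f m x I a h.

Lemma boundedH_deviation x : boundedH X H (deviation x).
Proof.
  unfold deviation, er_tilde_w, er_hat_w, er_tilde, er_hat.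
  apply boundedH_minus; apply boundedH_sumR; intros i _;
    apply boundedH_scal, boundedH_scal, boundedH_sumR; intros; apply boundedH_loss01.
Qed.

Lemma deviation_expand x h : deviation x h = sumR I (fun i => a i *
  (/ INR n * sumR (seq 0 n) (loss_at h i) - / INR m * sumR (x i) (loss_at h i))).
Proof.
  unfold deviation, er_tilde_w, er_hat_w, er_tilde, er_hat. rewrite <- sumR_minus.
  apply sumR_ext; intros. unfold loss_at; ring.
Qed.

Definition perm_space : list (nat -> list nat) := prod_space I (perms n) [].

Lemma perm_space_not_nil : perm_space <> [].
Proof. apply prod_space_not_nil, perms_not_nil. Qed.

Lemma perm_space_in y i : In y perm_space -> In i I -> In (y i) (perms n).
Proof. intros Hy Hi. eapply prod_space_in; eauto. Qed.

Lemma avg_sup_deviation_eq_perm_space :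
  avg (choices I n m) (fun x => supH X H (deviation x))
  = avg perm_space (fun y => supH X H (deviation (fun i => firstn m (y i)))).
Proof.
  rewrite choices_eq_prod_space.
  apply (avg_prod_space_transfer (@Permutation nat) (@Permutation_refl nat) _ _ _ _ (fun _ g => firstn m g)).
  - apply msubsets_not_nil; auto.
  - apply perms_not_nil.
  - intros i _ G HG. apply avg_msubsets_eq_avg_perms_firstn; auto.
  - intros x y Hxy. apply supH_ext; auto; try apply boundedH_deviation.
    intros h _. rewrite !deviation_expand. apply sumR_ext; intros i Hi.
    rewrite (sumR_perm _ _ _ (Hxy i Hi)). auto.
Qed.

Lemma avg_perm_space_comp (tau : nat -> list nat) (F : (nat -> list nat) -> R) :
  (forall i, In i I -> In (tau i) (perms n)) ->
  (forall x y, (forall i, In i I -> x i = y i) -> F x = F y) ->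
  avg perm_space (fun y => F (fun i => perm_comp (y i) (tau i))) = avg perm_space F.
Proof.
  intros Htau HF. symmetry.
  apply (avg_prod_space_transfer eq (@eq_refl _) _ _ _ _ (fun i g => perm_comp g (tau i)));
    auto using perms_not_nil.
  intros i Hi G _. symmetry. apply avg_perm_comp; auto.
Qed.

Lemma deviation_full_sample y h : m = n -> In y perm_space ->
  deviation (fun i => firstn m (y i)) h = 0.
Proof.
  intros Emn Hy. rewrite deviation_expand, <- (Rmult_0_r (INR (length I))), <- sumR_const.
  apply sumR_ext; intros i Hi. pose proof (perm_space_in y i Hy Hi) as Hyi. rewrite <- Emn in Hyi |- *.
  rewrite firstn_all2 by (apply perms_spec in Hyi as [-> _]; auto).
  apply in_perms_iff in Hyi. rewrite (sumR_perm _ _ _ Hyi). ring.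
Qed.

Lemma I_length_pos : (1 <= length I)%nat.
Proof. destruct I; [rewrite sumR_nil in a_sum; lra | simpl; lia]. Qed.

Lemma sum_sq_weights_pos : 0 < sumR I (fun i => a i ^ 2).
Proof.
  destruct (sumR_pos_exists I a) as [i [Hi Hai]]; [lra|].
  eapply Rlt_le_trans; [|apply (sumR_ge_elem I (fun i => a i ^ 2) i Hi)].
  - apply pow_lt; auto.
  - intros; apply pow2_ge_0.
Qed.

(** [ln] of the Sauer-Shelah bound for [length I * m] points. *)
Definition log_growth_bound : R := INR d * ln (exp 1 * INR (length I * m) / INR d).

Lemma log_growth_bound_pos : 0 < log_growth_bound.
Proof.
  unfold log_growth_bound. pose proof I_length_pos.
  apply Rmult_lt_0_compat; [apply lt_0_INR; lia|]. rewrite <- ln_1. apply ln_increasing; [lra|].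
  assert (Hd0 : 0 < INR d) by (apply lt_0_INR; lia).
  assert (Hkm : INR d <= INR (length I * m)) by (apply le_INR; nia).
  pose proof (exp_ineq1 1 ltac:(lra)). apply (Rmult_lt_reg_r (INR d)); auto.
  unfold Rdiv. rewrite Rmult_assoc, Rinv_l, Rmult_1_l, Rmult_1_r by lra. nra.
Qed.

Section Symmetrization.
Variables r p : nat.
Hypothesis n_eq : n = (m + r)%nat.
Hypothesis p_pos : (0 < p)%nat.
Hypothesis p_le_m : (p <= m)%nat.
Hypothesis p_le_r : (p <= r)%nat.

Definition pair_gap (z : nat -> list nat) (h : X -> bool) : R :=
  sumR I (fun i => a i * (/ INR p * sumR (seq 0 p) (fun j =>
    loss_at h i (nth0 (z i) (m + j)) - loss_at h i (nth0 (z i) j)))).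

Lemma boundedH_pair_gap z : boundedH X H (pair_gap z).
Proof.
  apply boundedH_sumR; intros i _. apply boundedH_scal, boundedH_scal, boundedH_sumR; intros j _.
  apply boundedH_minus; apply boundedH_loss01.
Qed.

Lemma deviation_eq_avg_rotations y h : In y perm_space ->
  deviation (fun i => firstn m (y i)) h
  = INR r / INR n * avg (seq 0 m) (fun k => avg (seq 0 r) (fun l =>
      pair_gap (fun i => perm_comp (y i) (block_rotation m r k l)) h)).
Proof.
  intros Hy. rewrite deviation_expand. unfold pair_gap.
  rewrite (avg_ext _ _ (fun k => sumR I (fun i => a i * avg (seq 0 r) (fun l =>
             / INR p * sumR (seq 0 p) (fun j =>
               loss_at h i (nth0 (perm_comp (y i) (block_rotation m r k l)) (m + j))
               - loss_at h i (nth0 (perm_comp (y i) (block_rotation m r k l)) j))))))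
    by (intros; rewrite avg_sumR; apply sumR_ext; intros; apply avg_scal).
  rewrite avg_sumR, <- sumR_scal. apply sumR_ext; intros i Hi.
  rewrite avg_scal, avg_block_rotations_pair_gaps by auto.
  pose proof (perm_space_in y i Hy Hi) as Hyi. rewrite n_eq in Hyi |- *.
  rewrite (sumR_perm_blocks m r (y i)), sumR_firstn_nth0 by (auto; apply perms_spec in Hyi; lia).
  unfold avg. rewrite !length_seq, plus_INR.
  assert (0 < INR m) by (apply lt_0_INR; lia). assert (0 < INR r) by (apply lt_0_INR; lia).
  field. lra.
Qed.

Lemma pair_gap_congr x y h : (forall i, In i I -> x i = y i) -> pair_gap x h = pair_gap y h.
Proof. intros Hxy. apply sumR_ext; intros i Hi. rewrite Hxy; auto. Qed.

Lemma avg_sup_deviation_le_pair_gap :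
  avg perm_space (fun y => supH X H (deviation (fun i => firstn m (y i))))
  <= INR r / INR n * avg perm_space (fun y => supH X H (pair_gap y)).
Proof.
  set (c := INR r / INR n).
  assert (Hc : 0 <= c) by (apply Rmult_le_pos; [apply pos_INR | apply Rinv_INR_nonneg]).
  set (rotated := fun (y : nat -> list nat) k l i => perm_comp (y i) (block_rotation m r k l)).
  transitivity (avg perm_space (fun y => c * avg (seq 0 m) (fun k => avg (seq 0 r) (fun l =>
                  supH X H (pair_gap (rotated y k l)))))).
  { apply avg_le; intros y Hy.
    assert (Hb : boundedH X H (fun h => avg (seq 0 m) (fun k => avg (seq 0 r) (fun l =>
                   pair_gap (rotated y k l) h))))
      by (apply boundedH_avg; intros; apply boundedH_avg; intros; apply boundedH_pair_gap).
    rewrite (supH_ext X H H_nonempty _ (fun h => c * avg (seq 0 m) (fun k => avg (seq 0 r) (fun l =>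
               pair_gap (rotated y k l) h))));
      [| apply boundedH_deviation | apply boundedH_scal; auto
       | intros h _; apply deviation_eq_avg_rotations; auto].
    eapply Rle_trans; [apply supH_scal; auto|]. apply Rmult_le_compat_l; auto.
    eapply Rle_trans; [apply (supH_avg X H H_nonempty (seq 0 m)
                         (fun k h => avg (seq 0 r) (fun l => pair_gap (rotated y k l) h)));
                       intros; apply boundedH_avg; intros; apply boundedH_pair_gap|].
    apply avg_le; intros k _. apply supH_avg; auto. intros; apply boundedH_pair_gap. }
  rewrite avg_scal. apply Rmult_le_compat_l; auto. right.
  rewrite avg_comm, <- (avg_const (seq 0 m) (avg perm_space (fun y => supH X H (pair_gap y))))
    by (apply seq_0_not_nil; lia).
  apply avg_ext; intros k Hk. apply in_seq in Hk.
  rewrite avg_comm, <- (avg_const (seq 0 r) (avg perm_space (fun y => supH X H (pair_gap y))))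
    by (apply seq_0_not_nil; lia).
  apply avg_ext; intros l Hl. apply in_seq in Hl.
  apply (avg_perm_space_comp (fun _ => block_rotation m r k l) (fun z => supH X H (pair_gap z))).
  - intros i _. rewrite n_eq. apply block_rotation_in_perms; lia.
  - intros x y Hxy. apply supH_ext; auto using boundedH_pair_gap. intros h _. apply pair_gap_congr; auto.
Qed.

Definition centered_loss (pos : nat -> nat -> nat) (s : R) (h : X -> bool) (i j : nat) : R :=
  a i * (s * (loss_at h i (pos i j) - / 2)).

Lemma boundedH_rademacher_centered pos s sigma :
  boundedH X H (rademacher_sum X I p (centered_loss pos s) sigma).
Proof.
  apply boundedH_sumR; intros i _. apply boundedH_sumR; intros j _.
  apply boundedH_scal, boundedH_scal, boundedH_scal, boundedH_minus;
    [apply boundedH_loss01 | apply boundedH_const].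
Qed.

Lemma avg_sup_rademacher_centered_le pos s : s * s = 1 ->
  avg (sign_space I p) (fun sigma => supH X H (rademacher_sum X I p (centered_loss pos s) sigma))
  <= sqrt (INR p * sumR I (fun i => a i ^ 2) / 4) * sqrt (2 * log_growth_bound).
Proof.
  intros Hs.
  set (Q := flat_map (fun i => map (fun j => S i (pos i j)) (seq 0 p)) I).
  assert (HQ : (length Q <= length I * m)%nat).
  { unfold Q. rewrite (length_flat_map_const _ p) by (intros; rewrite length_map, length_seq; auto).
    nia. }
  assert (HdM : (d <= length I * m)%nat) by (pose proof I_length_pos; nia).
  destruct (finite_representatives X H d H_VCdim d_pos Q (length I * m) HQ HdM)
    as [Vh [HV1 [HV2 HV3]]].
  apply (massart_finite_class X H H_nonempty I I_NoDup p _ Vh); auto.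
  - intros h Hh. destruct (HV2 h Hh) as [h' [Hh' Hm]]. exists h'; split; auto.
    intros i j Hi Hj. unfold centered_loss, loss_at. rewrite (map_eq_in _ _ _ Hm (S i (pos i j))); auto.
    apply in_flat_map. exists i; split; auto. apply in_map_iff. exists j; split; auto. apply in_seq; lia.
  - intros h Hh. right. transitivity (sumR I (fun i => INR p / 4 * a i ^ 2)).
    + apply sumR_ext; intros i Hi.
      rewrite (sumR_ext _ _ (fun _ => a i ^ 2 / 4)), sumR_const, length_seq; [field|].
      intros j _. unfold centered_loss, loss_at, loss01. destruct (Bool.eqb _ _); field_simplify; nra.
    + rewrite sumR_scal. field.
  - pose proof sum_sq_weights_pos. apply Rmult_lt_0_compat; [|lra].
    apply Rmult_lt_0_compat; [apply lt_0_INR; lia | auto].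
  - apply log_growth_bound_pos.
  - destruct H_nonempty as [h Hh]. destruct (HV2 h Hh) as [h' [Hh' _]].
    assert (Hpos : 0 < INR (length Vh)) by (apply INR_length_pos; intro E; rewrite E in Hh'; auto).
    eapply Rle_trans; [apply ln_le_ln; eauto|]. unfold log_growth_bound. rewrite ln_pow; [lra|].
    apply Rdiv_lt_0_compat; [|apply lt_0_INR; lia]. apply Rmult_lt_0_compat; [apply exp_pos|].
    apply lt_0_INR. pose proof I_length_pos. nia.
Qed.

Lemma pair_gap_pair_swap y sigma h :
  pair_gap (fun i => perm_comp (y i) (pair_swap_perm n m p (sigma i))) h
  = / INR p * (rademacher_sum X I p (centered_loss (fun i j => nth0 (y i) (m + j)) 1) sigma h
               + rademacher_sum X I p (centered_loss (fun i j => nth0 (y i) j) (-1)) sigma h).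
Proof.
  unfold pair_gap, rademacher_sum. rewrite <- sumR_plus, <- sumR_scal. apply sumR_ext; intros i Hi.
  rewrite <- sumR_plus, <- !sumR_scal. apply sumR_ext; intros j Hj. apply in_seq in Hj.
  rewrite nth0_comp_pair_swap_hi, nth0_comp_pair_swap_lo by lia. unfold centered_loss, sg.
  destruct (nth j (sigma i) false); ring.
Qed.

Lemma avg_sup_pair_gap_le :
  avg perm_space (fun y => supH X H (pair_gap y))
  <= / INR p * (2 * (sqrt (INR p * sumR I (fun i => a i ^ 2) / 4) * sqrt (2 * log_growth_bound))).
Proof.
  set (M := sqrt (INR p * sumR I (fun i => a i ^ 2) / 4) * sqrt (2 * log_growth_bound)).
  assert (Hp : 0 < / INR p) by (apply Rinv_0_lt_compat, lt_0_INR; lia).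
  assert (Hswap : avg perm_space (fun y => supH X H (pair_gap y))
    = avg perm_space (fun y => avg (sign_space I p) (fun sigma =>
        supH X H (pair_gap (fun i => perm_comp (y i) (pair_swap_perm n m p (sigma i))))))).
  { rewrite avg_comm, <- (avg_const (sign_space I p) (avg perm_space _))
      by (apply sign_space_not_nil).
    apply avg_ext; intros sigma _. symmetry.
    apply (avg_perm_space_comp (fun i => pair_swap_perm n m p (sigma i)) (fun z => supH X H (pair_gap z))).
    - intros i _. apply pair_swap_perm_in_perms; lia.
    - intros x z Hxz. apply supH_ext; auto using boundedH_pair_gap. intros h _. apply pair_gap_congr; auto. }
  rewrite Hswap, <- (avg_const perm_space (/ INR p * (2 * M))) by apply perm_space_not_nil.
  apply avg_le; intros y _.
  set (hi := centered_loss (fun i j => nth0 (y i) (m + j)) 1).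
  set (lo := centered_loss (fun i j => nth0 (y i) j) (-1)).
  transitivity (avg (sign_space I p) (fun sigma => / INR p * (supH X H (rademacher_sum X I p hi sigma)
                                                      + supH X H (rademacher_sum X I p lo sigma)))).
  { apply avg_le; intros sigma _.
    rewrite (supH_ext X H H_nonempty _ (fun h => / INR p * (rademacher_sum X I p hi sigma h
                                                          + rademacher_sum X I p lo sigma h)));
      [| apply boundedH_pair_gap
       | apply boundedH_scal, boundedH_plus; apply boundedH_rademacher_centered
       | intros h _; apply pair_gap_pair_swap].
    eapply Rle_trans; [apply supH_scal; [auto | lra | apply boundedH_plus; apply boundedH_rademacher_centered]|].
    apply Rmult_le_compat_l; [lra|]. apply supH_plus; auto; apply boundedH_rademacher_centered. }
  rewrite avg_scal, avg_plus. apply Rmult_le_compat_l; [lra|].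
  replace (2 * M) with (M + M) by ring.
  apply Rplus_le_compat; apply avg_sup_rademacher_centered_le; ring.
Qed.

End Symmetrization.

Lemma avg_sup_deviation_le :
  avg (choices I n m) (fun x => supH X H (deviation x))
  <= sqrt (sumR I (fun i => a i ^ 2))
     * sqrt (2 * INR d * ln (exp 1 * INR (length I) * INR m / INR d) / INR m).
Proof.
  rewrite avg_sup_deviation_eq_perm_space.
  destruct (Nat.eq_dec m n) as [Emn | Hmn].
  - transitivity (avg perm_space (fun _ => 0)).
    + apply avg_le; intros y Hy. apply supH_le; auto using boundedH_deviation.
      intros h _. rewrite deviation_full_sample; auto; lra.
    + rewrite avg_const by apply perm_space_not_nil. apply Rmult_le_pos; apply sqrt_pos.
  - set (r := (n - m)%nat). set (p := Nat.min m r).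
    eapply Rle_trans; [apply (avg_sup_deviation_le_pair_gap r p); unfold r, p; lia|].
    eapply Rle_trans.
    { apply Rmult_le_compat_l; [apply Rmult_le_pos; [apply pos_INR | apply Rinv_INR_nonneg]|].
      apply (avg_sup_pair_gap_le r p); unfold r, p; lia. }
    assert (E : 2 * INR d * ln (exp 1 * INR (length I) * INR m / INR d) / INR m
                = 2 * log_growth_bound / INR m).
    { unfold log_growth_bound. rewrite mult_INR, <- (Rmult_assoc (exp 1)). field. apply not_0_INR; lia. }
    rewrite E. apply symmetrization_constant_le; auto using sum_sq_weights_pos, log_growth_bound_pos;
      unfold p, r; try lia.
    replace n with (m + (n - m))%nat at 3 4 by lia. generalize (n - m)%nat. intros r'.
    destruct (Nat.le_ge_cases m r'); [rewrite Nat.min_l | rewrite Nat.min_r]; nia.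
Qed.

End SingleTask.

Lemma Phi_le_sum_supH {X} (S : nat -> nat -> X) f (H : (X -> bool) -> Prop) T n m I alpha x :
  (exists h, H h) ->
  Phi S f H T n m I alpha x
  <= / INR T * sumR (seq 0 T) (fun t => supH X H (deviation X S f n m I (alpha t) x)).
Proof.
  intros Hne. set (U := / INR T * sumR (seq 0 T) (fun t => supH X H (deviation X S f n m I (alpha t) x))).
  pose proof (Rinv_INR_nonneg T) as HT.
  assert (Hub : forall hs : nat -> X -> bool, (forall t, (t < T)%nat -> H (hs t)) ->
    / INR T * sumR (seq 0 T) (fun t => er_tilde_w S f n I (alpha t) (hs t)
                                         - er_hat_w S f m x I (alpha t) (hs t)) <= U).
  { intros hs Hhs. apply Rmult_le_compat_l; auto. apply sumR_le; intros t Ht. apply in_seq in Ht.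
    apply (supH_ub X H Hne (deviation X S f n m I (alpha t) x) (hs t));
      [apply boundedH_deviation | apply Hhs; lia]. }
  unfold Phi. apply Rsup_is_lub.
  - exists U. intros v [hs [Hhs ->]]. auto.
  - destruct Hne as [h0 Hh0]. eexists. exists (fun _ => h0). split; eauto.
  - intros v [hs [Hhs ->]]. auto.
Qed.

Theorem mainTheorem5
  (X : Type) (T n m k d : nat)
  (S : nat -> nat -> X) (f : nat -> X -> bool)
  (H : (X -> bool) -> Prop)
  (I : list nat) (alpha : nat -> nat -> R)
  (HI : NoDup I) (HIT : forall i, In i I -> (i < T)%nat)
  (Hk : length I = k)
  (Halpha : forall t, (t < T)%nat -> in_Lambda T I (alpha t))
  (HVC : VCdim H d)
  (Hd : (1 <= d)%nat) (Hdm : (d <= m)%nat) (Hmn : (m <= n)%nat) :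
  expect_subsets I n m (Phi S f H T n m I alpha)
  <= / INR T * sumR (seq 0 T) (fun t =>
        sqrt (sumR I (fun i => (alpha t i) ^ 2)))
     * sqrt (2 * INR d * ln (exp 1 * INR k * INR m / INR d) / INR m).
Proof.
  subst k.
  pose proof (Rinv_INR_nonneg T) as HT.
  change (expect_subsets I n m (Phi S f H T n m I alpha))
    with (avg (choices I n m) (Phi S f H T n m I alpha)).
  eapply Rle_trans;
    [apply avg_le; intros x _; apply Phi_le_sum_supH, (H_nonempty_of_VCdim H d HVC)|].
  rewrite avg_scal, avg_sumR, Rmult_assoc. apply Rmult_le_compat_l; auto.
  rewrite Rmult_comm, <- sumR_scal. apply sumR_le; intros t Ht. apply in_seq in Ht.
  destruct (Halpha t ltac:(lia)) as [_ [Hsum _]].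
  rewrite Rmult_comm. apply (avg_sup_deviation_le X S f H n m d I (alpha t)); auto.
Qed.
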